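(* Let $m\ge2$ and let $\mathcal{H}_{2m}$ be as defined in the context. For generic $x_1,\ldots,x_{m-1},x_{m+1},\ldots,x_{2m-1},x$, the limit of $\mathcal{H}_{2m}(x_1,\ldots,x_{m-1},x,x_{m+1},\ldots,x_{2m-1},y)$ as $y\to x+\eta$ exists and equals \[ \prod_{i\in\{1,\ldots,m-1\}\cup\{m+1,\ldots,2m-1\}}\theta(x-\eta-x_i)\theta(x-\eta+x_i)\ \cdot\ \mathcal{H}_{2m-2}(x_1,\ldots,x_{m-1},x_{m+1},\ldots,x_{2m-1}), \] where in $\mathcal{H}_{2m-2}$ the first group of variables is $x_1,\ldots,x_{m-1}$ and the second group is $x_{m+1},\ldots,x_{2m-1}$.
   Context: Theta functions: for $|q|<1$, $\theta_1(x;q)=2\sum_{n\ge0}(-1)^nq^{(n+1/2)^2}\sin((2n+1)x)$. Fix $p=e^{i\pi\tau}$ with $\operatorname{Im}\tau>0$, write $\theta(x)=\theta_1(x;p)$, set $\eta=\pi/3$, and $h(x,y)=\theta(\eta+x-y)\theta(\eta+x+y)\theta(\eta-x-y)\theta(\eta-x+y)$. For $k\ge1$, \[ \mathcal{H}_{2k}(x_1,\ldots,x_{2k})=\frac{\prod_{i=1}^k\prod_{j=k+1}^{2k}h(x_i,x_j)}{\prod_{1\le i<j\le k}\theta(x_i-x_j)\theta(x_i+x_j)\prod_{k+1\le i<j\le 2k}\theta(x_i-x_j)\theta(x_i+x_j)}\ \det_{1\le i\le k,\ k+1\le j\le 2k}\frac{1}{h(x_i,x_j)}, \] the first group of variables being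 $x_1,\ldots,x_k$ and the second $x_{k+1},\ldots,x_{2k}$. *)

From Stdlib Require Import Reals Lra ClassicalEpsilon.
Open Scope R_scope.

Definition Cx : Type := (R * R)%type.
Definition Cre (z : Cx) : R := fst z.
Definition Cim (z : Cx) : R := snd z.
Definition RtoC (r : R) : Cx := (r, 0).
Definition C0 : Cx := (0, 0).
Definition C1 : Cx := (1, 0).
Definition Ci : Cx := (0, 1).
Definition Cadd (z w : Cx) : Cx := (fst z + fst w, snd z + snd w).
Definition Copp (z : Cx) : Cx := (- fst z, - snd z).
Definition Csub (z w : Cx) : Cx := Cadd z (Copp w).
Definition Cmul (z w : Cx) : Cx :=
  (fst z * fst w - snd z * snd w, fst z * snd w + snd z * fst w).
Definition Cinv (z : Cx) : Cx :=
  (fst z / (fst z ^ 2 + snd z ^ 2), - snd z / (fst z ^ 2 + snd z ^ 2)).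
Definition Cdiv (z w : Cx) : Cx := Cmul z (Cinv w).
Definition Cnorm (z : Cx) : R := sqrt (fst z ^ 2 + snd z ^ 2).
Definition Cexp (z : Cx) : Cx := (exp (fst z) * cos (snd z), exp (fst z) * sin (snd z)).
Definition Csin (z : Cx) : Cx :=
  Cmul (Csub (Cexp (Cmul Ci z)) (Cexp (Copp (Cmul Ci z)))) (0, - / 2).
(* sin z = (e^{iz} - e^{-iz}) / (2i) ; note 1/(2i) = -i/2 *)

Fixpoint Cprod (n : nat) (f : nat -> Cx) : Cx :=
  match n with O => C1 | S n' => Cmul (Cprod n' f) (f n') end.
Fixpoint Csum (n : nat) (f : nat -> Cx) : Cx :=
  match n with O => C0 | S n' => Cadd (Csum n' f) (f n') end.

Definition Cseries_converges_to (f : nat -> Cx) (l : Cx) : Prop :=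
  Un_cv (fun N => fst (Csum (S N) f)) (fst l) /\
  Un_cv (fun N => snd (Csum (S N) f)) (snd l).
Definition Cseries (f : nat -> Cx) : Cx :=
  epsilon (inhabits C0) (fun l => Cseries_converges_to f l).

(* q^{s} with q = p = e^{i pi tau} is read as exp(i pi tau s). *)
Definition ppow (tau : Cx) (s : R) : Cx := Cexp (Cmul Ci (Cmul (RtoC (PI * s)) tau)).

Definition theta (tau : Cx) (x : Cx) : Cx :=
  Cmul (RtoC 2)
    (Cseries (fun n => Cmul (RtoC ((-1) ^ n))
        (Cmul (ppow tau ((INR n + / 2) ^ 2))
              (Csin (Cmul (RtoC (2 * INR n + 1)) x))))).

Definition eta : Cx := RtoC (PI / 3).

Definition hfun (tau : Cx) (x y : Cx) : Cx :=
  Cmul (Cmul (theta tau (Cadd eta (Csub x y))) (theta tau (Cadd eta (Cadd x y))))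
       (Cmul (theta tau (Csub eta (Cadd x y))) (theta tau (Cadd (Csub eta x) y))).

Definition minor (M : nat -> nat -> Cx) (j : nat) : nat -> nat -> Cx :=
  fun r c => M (S r) (if Nat.ltb c j then c else S c).
Fixpoint Cdet (n : nat) (M : nat -> nat -> Cx) : Cx :=
  match n with
  | O => C1
  | S n' => Csum (S n') (fun j =>
      Cmul (RtoC ((-1) ^ j)) (Cmul (M O j) (Cdet n' (minor M j))))
  end.

(* first group of variables: u 0, ..., u (k-1); second group: v 0, ..., v (k-1) *)
Definition Hfun (tau : Cx) (k : nat) (u v : nat -> Cx) : Cx :=
  let num := Cprod k (fun i => Cprod k (fun j => hfun tau (u i) (v j))) in
  let den1 := Cprod k (fun j => Cprod j (fun i =>
                 Cmul (theta tau (Csub (u i) (u j))) (theta tau (Cadd (u i) (u j))))) in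
  let den2 := Cprod k (fun j => Cprod j (fun i =>
                 Cmul (theta tau (Csub (v i) (v j))) (theta tau (Cadd (v i) (v j))))) in
  Cmul (Cdiv num (Cmul den1 den2))
       (Cdet k (fun i j => Cinv (hfun tau (u i) (v j)))).

Definition Clim_at (f : Cx -> Cx) (z0 L : Cx) : Prop :=
  forall eps, 0 < eps -> exists delta, 0 < delta /\
    forall y, 0 < Cnorm (Csub y z0) < delta -> Cnorm (Csub (f y) L) < eps.

(* a point of Cx^{2n+1}: (a 0..a (n-1), b 0..b (n-1), x);
   "the ball of radius r around (a,b,x)" in the max norm *)
Definition near (n : nat) (r : R) (a b : nat -> Cx) (x : Cx) (a' b' : nat -> Cx) (x' : Cx) : Prop :=
  Cnorm (Csub x' x) < r /\
  forall i, (i < n)%nat -> Cnorm (Csub (a' i) (a i)) < r /\ Cnorm (Csub (b' i) (b i)) < r.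

(* G is an open dense subset of Cx^{2n+1} (coordinates with index >= n ignored) *)
Definition open_dense (n : nat) (G : (nat -> Cx) -> (nat -> Cx) -> Cx -> Prop) : Prop :=
  (forall a b x, G a b x -> exists r, 0 < r /\
      forall a' b' x', near n r a b x a' b' x' -> G a' b' x') /\
  (forall a b x r, 0 < r -> exists a' b' x', near n r a b x a' b' x' /\ G a' b' x').

Definition put_at (k : nat) (a : nat -> Cx) (z : Cx) : nat -> Cx :=
  fun i => if Nat.eqb i k then z else a i.

(* Write x = x_m (last variable of the first group) and y = x_{2m}.  Expanding
   det [1/h(u_i, v_j)] along its corner entry gives
     det_{2m} = det_{2m}(corner entry replaced by 0) + 1/h(x,y) * det_{2m-2},
   so, after cancelling 1/h(x,y) against the factor h(x,y) of the numerator,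
     H_{2m}(.., x, .., y) = F(y) + h(x,y) * G(y),
   with F(y) = (explicit prefactor) * H_{2m-2} and F, G continuous at
   y0 = x + eta.  Since h(x, x + eta) contains theta(0) = 0, the limit is F(y0);
   oddness, theta(z + pi) = -theta(z) and pi = 3 eta turn F(y0) into the
   stated product.  This is valid whenever one explicit expression
   E(a, b, x) -- the product of all denominators involved -- is nonzero.

   The set {E <> 0} is the required generic set: it is open because theta is
   continuous, and dense because along the complex line
   t |-> (a + t*s, b + t*s, x + t) (suitable real slopes s) every theta factor
   of E is theta of a non-constant affine function of t, and zeros of theta
   are isolated.  The latter follows from a Taylor expansion of theta with an
   explicit remainder at every point, together with the fact that theta is
   not identically zero (its sine coefficients on the real line are tested
   against sin at equally spaced points). *)

From Stdlib Require Import Reals Lra Lia ClassicalEpsilon FunctionalExtensionality Factorial Classical.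
From Pilot Require Import Defs.
From Coquelicot Require Import Coquelicot.
Open Scope R_scope.

(* The operations of Defs are definitionally those of Coquelicot's complex
   numbers, so its field theory ([ring], [field], [Cmod] lemmas) applies. *)
Lemma CaddE : Cadd = Cplus. Proof. reflexivity. Qed.
Lemma CmulE : Cmul = Cmult. Proof. reflexivity. Qed.
Lemma CoppE : Defs.Copp = Complex.Copp. Proof. reflexivity. Qed.
Lemma CsubE : Csub = Cminus. Proof. reflexivity. Qed.
Lemma CinvE : Defs.Cinv = Complex.Cinv. Proof. reflexivity. Qed.
Lemma CdivE : Defs.Cdiv = Complex.Cdiv. Proof. reflexivity. Qed.
Lemma CnormE : Cnorm = Cmod. Proof. reflexivity. Qed.
Lemma C0E : C0 = RtoC 0. Proof. reflexivity. Qed.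
Lemma C1E : C1 = RtoC 1. Proof. reflexivity. Qed.
Lemma RtoCE : Defs.RtoC = Complex.RtoC. Proof. reflexivity. Qed.
Lemma CiE : Defs.Ci = Complex.Ci. Proof. reflexivity. Qed.

(* [toC] retypes an equation at [C] so that [ring]/[field] find the complex
   field structure; [cnorm] rewrites Defs operations into Coquelicot ones. *)
Ltac toC := try match goal with |- @eq _ ?a ?b => change (@eq C a b) end.
Ltac cnorm := rewrite ?CaddE, ?CmulE, ?CoppE, ?CsubE, ?CinvE, ?CdivE, ?CnormE, ?C0E, ?C1E, ?RtoCE, ?CiE in *.

Lemma RtoC_nz r : r <> 0 -> RtoC r <> RtoC 0.
Proof. intros H E. injection E. auto. Qed.
Lemma RtoC_sub r1 r2 : (RtoC r1 - RtoC r2)%C = RtoC (r1 - r2).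
Proof. unfold RtoC, Cminus, Cplus, Copp; simpl. f_equal; ring. Qed.
Lemma RtoC_add r1 r2 : (RtoC r1 + RtoC r2)%C = RtoC (r1 + r2).
Proof. unfold RtoC, Cplus; simpl. f_equal; ring. Qed.
Lemma RtoC_opp r1 : (- RtoC r1)%C = RtoC (- r1).
Proof. unfold RtoC, Copp; simpl. f_equal; ring. Qed.

Lemma Cmul_nz (a b : C) : a <> RtoC 0 -> b <> RtoC 0 -> (a * b)%C <> RtoC 0.
Proof. intros Ha Hb E. apply (f_equal Cmod) in E. rewrite Cmod_mult, Cmod_0 in E.
  apply Rmult_integral in E. destruct E as [E|E]; apply Cmod_eq_0 in E; auto. Qed.
Lemma Cmul_nz_l (a b : C) : (a * b)%C <> RtoC 0 -> a <> RtoC 0.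
Proof. intros H E. apply H. rewrite E. toC. ring. Qed.
Lemma Cmul_nz_r (a b : C) : (a * b)%C <> RtoC 0 -> b <> RtoC 0.
Proof. intros H E. apply H. rewrite E. toC. ring. Qed.

(* With the convention 1/0 = 0 of [Cinv], inversion is multiplicative
   without side conditions. *)
Lemma Cinv_mul (a b : C) : (/ (a * b))%C = (/ a * / b)%C.
Proof.
  assert (Cinv0 : (/ RtoC 0)%C = RtoC 0).
  { unfold Cinv, RtoC; cbn [fst snd]. replace (0 ^ 2 + 0 ^ 2) with 0 by ring.
    unfold Rdiv. rewrite Rinv_0. f_equal; ring. }
  destruct (classic (a = RtoC 0)) as [Ha|Ha].
  { subst. replace (RtoC 0 * b)%C with (RtoC 0) by (toC; ring). rewrite Cinv0. toC. ring. }
  destruct (classic (b = RtoC 0)) as [Hb|Hb].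
  { subst. replace (a * RtoC 0)%C with (RtoC 0) by (toC; ring). rewrite Cinv0. toC. ring. }
  toC. field. auto.
Qed.

Lemma Csum_S K f : Csum (S K) f = (Csum K f + f K)%C.
Proof. reflexivity. Qed.
Lemma Csum_ext K f g : (forall k, (k < K)%nat -> f k = g k) -> Csum K f = Csum K g.
Proof. induction K; intros H; simpl; auto. rewrite IHK, H; auto. Qed.
Lemma Csum_scal_l K (c : C) f : Csum K (fun k => c * f k)%C = (c * Csum K f)%C.
Proof. induction K; simpl. cnorm. toC. ring. rewrite IHK. cnorm. toC. ring. Qed.
Lemma Csum_plus k f g : Csum k (fun j => f j + g j)%C = (Csum k f + Csum k g)%C.
Proof. induction k; simpl. cnorm; toC; ring. rewrite IHk. cnorm. toC. ring. Qed.
Lemma Csum_zero K : Csum K (fun _ => RtoC 0) = RtoC 0.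
Proof. induction K; simpl. reflexivity. rewrite IHK. cnorm. toC. ring. Qed.

Lemma Csum_first M f : (1 <= M)%nat ->
  (forall n, (1 <= n)%nat -> (n < M)%nat -> f n = RtoC 0) -> Csum M f = f 0%nat.
Proof.
  intros HM H. induction M. lia. destruct M. simpl. cnorm. toC. ring.
  rewrite Csum_S, IHM. rewrite (H (S M)) by lia. toC. ring. lia. intros; apply H; lia.
Qed.

Lemma Cprod_S k f : Cprod (S k) f = (Cprod k f * f k)%C.
Proof. reflexivity. Qed.
Lemma Cprod_ext k f g : (forall i, (i < k)%nat -> f i = g i) -> Cprod k f = Cprod k g.
Proof. induction k; intros H; simpl; auto. rewrite IHk, H; auto. Qed.
Lemma Cprod_mul k f g : Cprod k (fun i => f i * g i)%C = (Cprod k f * Cprod k g)%C.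
Proof. induction k; simpl. cnorm. toC. ring. rewrite IHk. cnorm. toC. ring. Qed.

Lemma Cprod_nz_inv k f i : Cprod k f <> RtoC 0 -> (i < k)%nat -> f i <> RtoC 0.
Proof.
  induction k; intros H Hi. lia. rewrite Cprod_S in H.
  destruct (Nat.eq_dec i k). subst. eapply Cmul_nz_r; eauto.
  apply IHk. eapply Cmul_nz_l; eauto. lia.
Qed.

(* Coquelicot's [is_series] on [R], with the canonical structures fixed
   once and for all, and its link with Stdlib's [Un_cv]/[sum_f_R0]. *)
Lemma is_series_Un_cv (a : nat -> R) (l : R) : is_series a l -> Un_cv (sum_f_R0 a) l.
Proof. intro H. apply is_series_Reals in H. exact H. Qed.
Lemma Un_cv_is_series (a : nat -> R) (l : R) : Un_cv (sum_f_R0 a) l -> is_series a l.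
Proof. intro H. apply is_series_Reals. exact H. Qed.

Lemma series_plus (a b : nat -> R) (la lb : R) : is_series a la -> is_series b lb ->
  is_series (fun n => a n + b n) (la + lb).
Proof. intros. apply (@is_series_plus R_AbsRing R_NormedModule a b la lb); auto. Qed.
Lemma series_scal (c : R) (a : nat -> R) (la : R) : is_series a la -> is_series (fun n => c * a n) (c * la).
Proof. intros. apply (@is_series_scal R_AbsRing R_NormedModule c a la); auto. Qed.
Lemma series_opp (a : nat -> R) (la : R) : is_series a la -> is_series (fun n => - a n) (- la).
Proof. intros. apply (@is_series_opp R_AbsRing R_NormedModule a la); auto. Qed.
Lemma series_ext (a b : nat -> R) (l : R) : (forall n, a n = b n) -> is_series a l -> is_series b l.
Proof. intros. eapply (@is_series_ext R_AbsRing R_NormedModule); eauto. Qed.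
Lemma series_unique (a : nat -> R) (l l' : R) : is_series a l -> is_series a l' -> l = l'.
Proof. intros H1 H2. rewrite <- (is_series_unique _ _ H1). apply is_series_unique; auto. Qed.
Lemma series_zero : is_series (fun _ => 0) 0.
Proof.
  apply Un_cv_is_series. intros e He. exists 0%nat. intros n _. rewrite sum_cte.
  unfold R_dist. replace (0 * INR (S n) - 0) with 0 by ring. rewrite Rabs_R0; auto.
Qed.
Lemma ex_series_Series (a : nat -> R) : ex_series a -> is_series a (Series a).
Proof. intros. apply Series_correct. auto. Qed.

Lemma series_le (a b : nat -> R) (la lb : R) :
  is_series a la -> is_series b lb -> (forall n, a n <= b n) -> la <= lb.
Proof.
  intros Ha Hb H. apply is_series_Un_cv in Ha. apply is_series_Un_cv in Hb.
  apply (@Rle_cv_lim (sum_f_R0 a) (sum_f_R0 b) la lb); auto. intro n. apply sum_Rle. intros; auto.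
Qed.

Lemma series_nonneg (a : nat -> R) (la : R) : is_series a la -> (forall n, 0 <= a n) -> 0 <= la.
Proof. intros. apply (series_le (fun _ => 0) a 0 la); auto. apply series_zero. Qed.

Lemma ex_series_dominated (a b : nat -> R) : (forall n, Rabs (a n) <= b n) -> ex_series b -> ex_series a.
Proof. intros H Hb. apply (@ex_series_le R_AbsRing R_CompleteNormedModule a b); auto. Qed.

Lemma series_abs_le (a b : nat -> R) (la B : R) :
  is_series a la -> is_series b B -> (forall n, Rabs (a n) <= b n) -> Rabs la <= B.
Proof.
  intros Ha Hb H. apply Rabs_le. split.
  - apply (series_le (fun n => - b n) a (- B)); auto. apply series_opp; auto.
    intro n. specialize (H n). apply Rabs_le_between in H. lra.
  - apply (series_le a b); auto. intro n. specialize (H n). apply Rabs_le_between in H. lra.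
Qed.

Fixpoint Rsum_lt (N : nat) (g : nat -> R) : R :=
  match N with O => 0 | S N => Rsum_lt N g + g N end.

Lemma Rsum_lt_sum_f_R0 N g : Rsum_lt (S N) g = sum_f_R0 g N.
Proof. induction N. simpl. ring. simpl sum_f_R0. rewrite <- IHN. reflexivity. Qed.
Lemma Rsum_lt_ext N f g : (forall j, (j < N)%nat -> f j = g j) -> Rsum_lt N f = Rsum_lt N g.
Proof. induction N; intros H; simpl; auto. rewrite IHN, H; auto. Qed.
Lemma Rsum_lt_minus N f g : Rsum_lt N (fun j => f j - g j) = Rsum_lt N f - Rsum_lt N g.
Proof. induction N; simpl. ring. rewrite IHN. ring. Qed.
Lemma Rsum_lt_scal N c f : Rsum_lt N (fun j => c * f j) = c * Rsum_lt N f.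
Proof. induction N; simpl. ring. rewrite IHN. ring. Qed.
Lemma Rsum_lt_const N c : Rsum_lt N (fun _ => c) = INR N * c.
Proof. induction N; simpl Rsum_lt. simpl; ring. rewrite IHN, S_INR. ring. Qed.
Lemma Rsum_lt_abs N f : (forall j, Rabs (f j) <= 1) -> Rabs (Rsum_lt N f) <= INR N.
Proof. induction N; intros H; simpl Rsum_lt. simpl. rewrite Rabs_R0; lra.
  rewrite S_INR. eapply Rle_trans. apply Rabs_triang. specialize (IHN H). specialize (H N). lra. Qed.

Lemma series_shift (b : nat -> R) (A : R) M :
  is_series b A -> is_series (fun k => b (M + k)%nat) (A - Rsum_lt M b).
Proof.
  intro H. induction M.
  - simpl. replace (A - 0) with A by ring. eapply series_ext; [|exact H]. auto.
  - assert (H2 := @is_series_incr_1 R_AbsRing R_NormedModule (fun k => b (M + k)%nat) (A - Rsum_lt (S M) b)).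
    eapply series_ext; [|apply H2]. intro n. simpl. f_equal. lia.
    assert (E : A - Rsum_lt M b = (A - Rsum_lt (S M) b) + b (M + 0)%nat)
      by (simpl Rsum_lt; rewrite Nat.add_0_r; ring).
    rewrite E in IHM. exact IHM.
Qed.

Lemma fst_le_Cmod (z : C) : Rabs (fst z) <= Cmod z.
Proof. pose proof (Rmax_Cmod z). pose proof (Rmax_l (Rabs (fst z)) (Rabs (snd z))). lra. Qed.
Lemma snd_le_Cmod (z : C) : Rabs (snd z) <= Cmod z.
Proof. pose proof (Rmax_Cmod z). pose proof (Rmax_r (Rabs (fst z)) (Rabs (snd z))). lra. Qed.
Lemma Cmod_le_2 (z : C) (B : R) : Rabs (fst z) <= B -> Rabs (snd z) <= B -> Cmod z <= 2 * B.
Proof.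
  intros H1 H2. pose proof (Cmod_2Rmax z).
  assert (Rmax (Rabs (fst z)) (Rabs (snd z)) <= B) by (apply Rmax_lub; auto).
  assert (sqrt 2 < 2). { pose proof (sqrt_sqrt 2 ltac:(lra)). pose proof (sqrt_pos 2). nra. }
  assert (0 <= Rmax (Rabs (fst z)) (Rabs (snd z))) by (eapply Rle_trans; [apply Rabs_pos| apply Rmax_l]).
  nra.
Qed.

Definition is_Cseries (f : nat -> C) (l : C) : Prop :=
  is_series (fun n => fst (f n)) (fst l) /\ is_series (fun n => snd (f n)) (snd l).

Lemma fst_Csum M f : fst (Csum M f) = Rsum_lt M (fun n => fst (f n)).
Proof. induction M; simpl; auto. rewrite IHM. auto. Qed.
Lemma snd_Csum M f : snd (Csum M f) = Rsum_lt M (fun n => snd (f n)).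
Proof. induction M; simpl; auto. rewrite IHM. auto. Qed.
Lemma Csum_RtoC N g : Csum N (fun j => RtoC (g j)) = RtoC (Rsum_lt N g).
Proof. induction N; simpl. reflexivity. rewrite IHN. unfold Cadd, RtoC; simpl. f_equal; ring. Qed.

Lemma is_Cseries_converges f l : is_Cseries f l <-> Cseries_converges_to f l.
Proof.
  unfold Cseries_converges_to.
  assert (E : forall (g : nat -> R) (L : R),
             is_series g L <-> Un_cv (fun N => Rsum_lt (S N) g) L).
  { intros g L. split; intro H.
    - intros e He. destruct (is_series_Un_cv _ _ H e He) as [N HN]. exists N. intros n Hn.
      rewrite Rsum_lt_sum_f_R0. apply HN; auto.
    - apply Un_cv_is_series. intros e He. destruct (H e He) as [N HN]. exists N. intros n Hn.
      rewrite <- Rsum_lt_sum_f_R0. apply HN; auto. }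
  unfold is_Cseries. rewrite !E.
  split; intros [H1 H2]; split; intros e He;
    [destruct (H1 e He) as [N HN] | destruct (H2 e He) as [N HN]
    |destruct (H1 e He) as [N HN] | destruct (H2 e He) as [N HN]];
    exists N; intros n Hn; specialize (HN n Hn); rewrite ?fst_Csum, ?snd_Csum in *; auto.
Qed.

Lemma is_Cseries_unique f l l' : is_Cseries f l -> is_Cseries f l' -> l = l'.
Proof. intros [a b] [c d]. destruct l, l'. simpl in *.
  f_equal; eapply series_unique; eauto. Qed.

Lemma is_Cseries_value f l : is_Cseries f l -> Cseries f = l.
Proof.
  intros H. pose proof (epsilon_spec (inhabits C0) (fun l => Cseries_converges_to f l)) as E.
  unfold Cseries. apply (is_Cseries_unique f); auto. apply is_Cseries_converges. apply E.
  exists l. apply is_Cseries_converges; auto.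
Qed.

Lemma is_Cseries_dominated (f : nat -> C) (b : nat -> R) :
  (forall n, Cmod (f n) <= b n) -> ex_series b -> exists l, is_Cseries f l.
Proof.
  intros H Hb.
  assert (E1 : ex_series (fun n => fst (f n))).
  { apply (ex_series_dominated _ b); auto. intro n. eapply Rle_trans; [apply fst_le_Cmod|auto]. }
  assert (E2 : ex_series (fun n => snd (f n))).
  { apply (ex_series_dominated _ b); auto. intro n. eapply Rle_trans; [apply snd_le_Cmod|auto]. }
  exists (Series (fun n => fst (f n)), Series (fun n => snd (f n))). split; simpl; apply ex_series_Series; auto.
Qed.

Lemma is_Cseries_bound f l (b : nat -> R) B :
  is_Cseries f l -> (forall n, Cmod (f n) <= b n) -> is_series b B -> Cmod l <= 2 * B.
Proof.
  intros [H1 H2] Hb HB. apply Cmod_le_2.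
  - apply (series_abs_le _ b _ _ H1 HB). intro n. eapply Rle_trans; [apply fst_le_Cmod|auto].
  - apply (series_abs_le _ b _ _ H2 HB). intro n. eapply Rle_trans; [apply snd_le_Cmod|auto].
Qed.

Lemma is_Cseries_plus f g l l' :
  is_Cseries f l -> is_Cseries g l' -> is_Cseries (fun n => (f n + g n)%C) (l + l')%C.
Proof. intros [a b] [c d]. split; simpl; apply series_plus; auto. Qed.

Lemma is_Cseries_scal (c : C) f l : is_Cseries f l -> is_Cseries (fun n => (c * f n)%C) (c * l)%C.
Proof. intros [a b]. split; simpl.
  - apply series_plus. apply series_scal; auto. apply series_opp, series_scal; auto.
  - apply series_plus; apply series_scal; auto.
Qed.

Lemma is_Cseries_ext f g l : (forall n, f n = g n) -> is_Cseries f l -> is_Cseries g l.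
Proof. intros H [a b]. split; eapply series_ext; try eassumption; intro n; simpl; rewrite H; auto. Qed.

Lemma is_Cseries_zero : is_Cseries (fun _ => 0%C) 0%C.
Proof. split; apply series_zero. Qed.

Lemma is_Cseries_scal_r (c : C) f l : is_Cseries f l -> is_Cseries (fun n => (f n * c)%C) (l * c)%C.
Proof.
  intro H. replace (l * c)%C with (c * l)%C by (toC; ring).
  eapply is_Cseries_ext; [|apply (is_Cseries_scal c f l H)]. intro n. simpl. toC. ring.
Qed.

Lemma is_Cseries_minus f g l l' :
  is_Cseries f l -> is_Cseries g l' -> is_Cseries (fun n => (f n - g n)%C) (l - l')%C.
Proof. intros H1 H2.
  assert (H3 := is_Cseries_scal (-1)%C g l' H2).
  replace (l - l')%C with (l + (-1) * l')%C by ring.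
  eapply is_Cseries_ext; [|apply (is_Cseries_plus _ _ _ _ H1 H3)]. intro n; simpl. ring.
Qed.

Lemma is_Cseries_Csum (K : nat) (f : nat -> nat -> C) (l : nat -> C) :
  (forall k, (k < K)%nat -> is_Cseries (f k) (l k)) ->
  is_Cseries (fun n => Csum K (fun k => f k n)) (Csum K l).
Proof.
  induction K; intros H.
  - simpl. apply is_Cseries_zero.
  - simpl. apply (is_Cseries_plus (fun n => Csum K (fun k => f k n)) (f K)); auto.
Qed.

Lemma is_Cseries_shift f l M :
  is_Cseries f l -> is_Cseries (fun k => f (M + k)%nat) (l - Csum M f)%C.
Proof.
  intros [H1 H2]. split.
  - replace (fst (l - Csum M f)%C) with (fst l - Rsum_lt M (fun n => fst (f n))).
    apply (series_shift (fun n => fst (f n))); auto.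
    unfold Cminus, Cplus, Copp. cbn [fst]. rewrite fst_Csum. ring.
  - replace (snd (l - Csum M f)%C) with (snd l - Rsum_lt M (fun n => snd (f n))).
    apply (series_shift (fun n => snd (f n))); auto.
    unfold Cminus, Cplus, Copp. cbn [snd]. rewrite snd_Csum. ring.
Qed.

Lemma Cseries_scal (f g : nat -> C) (c : C) : (exists l, is_Cseries g l) ->
  (forall n, f n = c * g n)%C -> Cseries f = (c * Cseries g)%C.
Proof.
  intros [l Hl] H. rewrite (is_Cseries_value g l Hl). apply is_Cseries_value.
  eapply is_Cseries_ext; [|apply (is_Cseries_scal c g l Hl)]. intro n. auto.
Qed.

(** * The complex exponential and its Taylor polynomials *)

Lemma exp_le_mono x y : x <= y -> exp x <= exp y.
Proof. intro H. destruct (Rle_lt_or_eq_dec _ _ H) as [h|h]. left; apply exp_increasing; auto. rewrite h; lra. Qed.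

Lemma Cexp_add u v : Cexp (u + v)%C = (Cexp u * Cexp v)%C.
Proof.
  destruct u as [a b], v as [c d]. unfold Cexp. simpl.
  rewrite exp_plus, cos_plus, sin_plus. unfold Cmult; simpl. f_equal; ring.
Qed.

Lemma Cmod_Cexp u : Cmod (Cexp u) = exp (fst u).
Proof.
  unfold Cexp, Cmod. cbn [fst snd].
  replace ((exp (fst u) * cos (snd u)) ^ 2 + (exp (fst u) * sin (snd u)) ^ 2)
    with ((exp (fst u))^2 * (sin (snd u) ^ 2 + cos (snd u) ^ 2)) by ring.
  rewrite <- !Rsqr_pow2. rewrite sin2_cos2, Rmult_1_r. apply sqrt_Rsqr. pose proof (exp_pos (fst u)); lra.
Qed.

Lemma Cmod_Cexp_le u : Cmod (Cexp u) <= exp (Cmod u).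
Proof.
  rewrite Cmod_Cexp. apply exp_le_mono.
  pose proof (fst_le_Cmod u). pose proof (Rle_abs (fst u)). lra.
Qed.

Lemma CsinE z : Csin z = ((Cexp (Ci * z) - Cexp (- (Ci * z))) * (0%R, (- / 2)%R))%C.
Proof. reflexivity. Qed.

Definition neg_half_i : C := (0%R, (-/2)%R).

Lemma Cmod_neg_half_i : Cmod neg_half_i = /2.
Proof. unfold Cmod, neg_half_i; cbn [fst snd]. replace (0^2 + (-/2)^2) with (Rsqr (/2)) by (unfold Rsqr; field).
  apply sqrt_Rsqr. lra. Qed.

Lemma Cmod_Ci : Cmod Ci = 1.
Proof. unfold Cmod, Ci; cbn [fst snd]. replace (0^2 + 1^2) with 1 by ring. apply sqrt_1. Qed.

Lemma Cmod_Ci_mul (v : C) : Cmod (Ci * v)%C = Cmod v.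
Proof. rewrite Cmod_mult, Cmod_Ci. ring. Qed.

Lemma Cmod_Csin_le z : Cmod (Csin z) <= exp (Cmod z).
Proof.
  rewrite CsinE, Cmod_mult. fold neg_half_i. rewrite Cmod_neg_half_i.
  pose proof (Cmod_Cexp_le (Ci * z)%C). pose proof (Cmod_Cexp_le (- (Ci * z))%C).
  rewrite Cmod_opp, Cmod_Ci_mul in *.
  pose proof (Cmod_triangle (Cexp (Ci * z)%C) (- Cexp (- (Ci*z))%C)%C). rewrite Cmod_opp in H1.
  unfold Cminus. nra.
Qed.

Lemma Csin_real x : Csin (RtoC x) = RtoC (sin x).
Proof.
  rewrite CsinE.
  replace (Ci * RtoC x)%C with ((0, x) : C) by (unfold Ci, RtoC, Cmult; simpl; f_equal; ring).
  replace (- (0, x))%C with ((0, -x) : C) by (unfold Copp; simpl; f_equal; ring).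
  unfold Cexp. cbn [fst snd]. rewrite exp_0, cos_neg, sin_neg.
  unfold RtoC, Cminus, Cplus, Copp, Cmult. cbn [fst snd]. f_equal; field.
Qed.

Lemma Csin_neg v : Csin (- v)%C = (- Csin v)%C.
Proof. rewrite !CsinE. replace (Ci * - v)%C with (- (Ci * v))%C by (toC; ring).
  replace (- - (Ci * v))%C with (Ci * v)%C by (toC; ring). toC. ring. Qed.

Fixpoint Cpown (u : C) (k : nat) : C := match k with O => (RtoC 1) | S k => (u * Cpown u k)%C end.
Lemma Cmod_Cpown u k : Cmod (Cpown u k) = Cmod u ^ k.
Proof. induction k; simpl. apply Cmod_1. rewrite Cmod_mult, IHk. ring. Qed.
Lemma Cpown_mul u v k : Cpown (u * v)%C k = (Cpown u k * Cpown v k)%C.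
Proof. induction k; simpl. ring. rewrite IHk. ring. Qed.

Lemma pow_fact_le_exp x k : 0 <= x -> x ^ k / INR (fact k) <= exp x.
Proof.
  intro Hx. eapply Rle_trans; [|apply (exp_ge_taylor x k Hx)].
  destruct k. simpl. lra.
  change (sum_f_R0 ?f (S k)) with (sum_f_R0 f k + f (S k)).
  assert (0 <= sum_f_R0 (fun k0 => x ^ k0 / INR (fact k0)) k).
  { apply cond_pos_sum. intro. apply Rmult_le_pos. apply pow_le; auto. left; apply Rinv_0_lt_compat, INR_fact_lt_0. }
  lra.
Qed.

Definition exp_taylor_poly (u : C) (K : nat) : C :=
  Csum (S K) (fun k => Cpown u k * RtoC (/ INR (fact k)))%C.

(* To bound its error we apply the real Lagrange formula to
   t |-> Re (v e^{t u}) on [0, 1]; its k-th derivative is Re (v u^k e^{t u}). *)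
Definition exp_ray (u : C) (t : R) : C :=
  (exp (t * fst u) * cos (t * snd u), exp (t * fst u) * sin (t * snd u)).
Lemma exp_ray_Cexp u t : Cexp (RtoC t * u)%C = exp_ray u t.
Proof. unfold Cexp, exp_ray. simpl. f_equal; f_equal; f_equal; ring. Qed.
Definition re_exp_ray (u v : C) (t : R) : R := fst (v * exp_ray u t)%C.

Lemma re_exp_ray_derive u v t : is_derive (re_exp_ray u v) t (re_exp_ray u (v * u)%C t).
Proof.
  unfold re_exp_ray, exp_ray. simpl. destruct u as [a b], v as [c d]. simpl.
  auto_derive. auto. ring.
Qed.

Lemma re_exp_ray_Derive_n u v k : Derive_n (re_exp_ray u v) k = re_exp_ray u (v * Cpown u k)%C.
Proof.
  revert v. induction k; intro v.
  - simpl. apply functional_extensionality. intro t. unfold re_exp_ray. f_equal. f_equal. ring.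
  - simpl. rewrite IHk. apply functional_extensionality. intro t.
    rewrite (is_derive_unique _ _ _ (re_exp_ray_derive u _ t)). unfold re_exp_ray. f_equal. f_equal. ring.
Qed.

Lemma re_exp_ray_ex_derive_n u v k t : ex_derive_n (re_exp_ray u v) k t.
Proof. destruct k. simpl; auto. simpl. rewrite re_exp_ray_Derive_n. eexists. apply re_exp_ray_derive. Qed.

Lemma re_exp_taylor_poly (v : C) u K :
  fst (v * exp_taylor_poly u K)%C = sum_f_R0 (fun m => fst (v * Cpown u m)%C / INR (fact m)) K.
Proof.
  unfold exp_taylor_poly. induction K.
  - simpl. unfold Cmult, Cplus; simpl. field.
  - change (Csum (S (S K)) ?F) with (Cadd (Csum (S K) F) (F (S K))).
    change (sum_f_R0 ?G (S K)) with (sum_f_R0 G K + G (S K)).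
    rewrite <- IHK. unfold Cadd, Cmult, RtoC; cbn [fst snd]. field. apply INR_fact_neq_0.
Qed.

(* The Lagrange remainder, with |Re(v u^{K+1} e^{z u})| <= |v| |u|^{K+1} e^{|u|}. *)
Lemma re_exp_taylor_bound (v u : C) K :
  Rabs (fst (v * Cexp u)%C - fst (v * exp_taylor_poly u K)%C)
  <= Cmod v * Cmod u ^ S K * exp (Cmod u) / INR (fact (S K)).
Proof.
  destruct (Taylor_Lagrange (re_exp_ray u v) K 0 1 Rlt_0_1) as [z [Hz E]].
  { intros. apply re_exp_ray_ex_derive_n. }
  assert (E1 : re_exp_ray u v 1 = fst (v * Cexp u)%C).
  { unfold re_exp_ray. replace u with (RtoC 1 * u)%C at 2 by ring. rewrite exp_ray_Cexp. auto. }
  rewrite E1 in E. rewrite E, re_exp_taylor_poly.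
  replace (sum_f_R0 (fun m => (1 - 0) ^ m / INR (fact m) * Derive_n (re_exp_ray u v) m 0) K)
    with (sum_f_R0 (fun m => fst (v * Cpown u m)%C / INR (fact m)) K).
  2:{ apply sum_eq. intros i _. rewrite re_exp_ray_Derive_n. unfold re_exp_ray.
      replace (exp_ray u 0) with (RtoC 1).
      2:{ unfold exp_ray. rewrite !Rmult_0_l, exp_0, cos_0, sin_0. unfold RtoC. f_equal; ring. }
      rewrite Cmult_1_r. replace (1-0) with 1 by ring. rewrite pow1. field. apply INR_fact_neq_0. }
  match goal with |- Rabs (?s + ?r - ?s) <= _ => replace (s + r - s) with r by ring end.
  assert (HD : Rabs (re_exp_ray u (v * Cpown u (S K))%C z) <= Cmod v * Cmod u ^ S K * exp (Cmod u)).
  { unfold re_exp_ray. eapply Rle_trans. apply fst_le_Cmod. rewrite !Cmod_mult, Cmod_Cpown.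
    apply Rmult_le_compat_l. apply Rmult_le_pos; [apply Cmod_ge_0|apply pow_le, Cmod_ge_0].
    rewrite <- exp_ray_Cexp, Cmod_Cexp. apply exp_le_mono.
    replace (fst (RtoC z * u)%C) with (z * fst u) by (unfold Cmult, RtoC; cbn [fst snd]; ring).
    pose proof (fst_le_Cmod u). pose proof (Rle_abs (fst u)). pose proof (Cmod_ge_0 u).
    destruct (Rle_dec 0 (fst u)); nra. }
  rewrite re_exp_ray_Derive_n. replace (1-0) with 1 by ring. rewrite pow1.
  assert (HF : 0 < INR (fact (S K))) by (apply INR_fact_lt_0).
  replace (1 / INR (fact (S K)) * re_exp_ray u (v * Cpown u (S K))%C z)
    with (re_exp_ray u (v * Cpown u (S K))%C z / INR (fact (S K))) by (field; lra).
  unfold Rdiv. rewrite Rabs_mult, Rabs_inv, (Rabs_right (INR _)) by lra.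
  apply Rmult_le_compat_r. left; apply Rinv_0_lt_compat; auto. auto.
Qed.

(* Taylor bound for the complex exponential (real and imaginary parts are
   the cases v = 1 and v = -i above). *)
Lemma Cexp_taylor_bound u K :
  Cmod (Cexp u - exp_taylor_poly u K)%C <= 4 * (Cmod u ^ S K * exp (Cmod u) / INR (fact (S K))).
Proof.
  assert (Hpos : 0 <= Cmod u ^ S K * exp (Cmod u) / INR (fact (S K))).
  { apply Rmult_le_pos. apply Rmult_le_pos. apply pow_le, Cmod_ge_0. left; apply exp_pos.
    left; apply Rinv_0_lt_compat, INR_fact_lt_0. }
  replace 4 with (2 * 2) by ring. rewrite Rmult_assoc. apply Cmod_le_2.
  - pose proof (re_exp_taylor_bound (RtoC 1) u K) as H. rewrite Cmod_1, !Cmult_1_l in H.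
    replace (fst (Cexp u - exp_taylor_poly u K)%C) with (fst (Cexp u) - fst (exp_taylor_poly u K))
      by (unfold Cminus, Cplus, Copp; simpl; ring).
    lra.
  - pose proof (re_exp_taylor_bound (- Ci)%C u K) as H. rewrite Cmod_opp, Cmod_Ci in H.
    replace (snd (Cexp u - exp_taylor_poly u K)%C)
      with (fst (- Ci * Cexp u)%C - fst (- Ci * exp_taylor_poly u K)%C)
      by (unfold Cminus, Cplus, Copp, Cmult, Ci; simpl; ring).
    lra.
Qed.

(** * The theta series *)

(* Notation: q = e^{i pi tau}, so |q^s| = exp(-s * nome_decay tau), and
   theta(z) = 2 sum_n theta_coef n * sin (freq n * z). *)
Definition nome_decay (tau : C) : R := PI * snd tau.
Definition freq (n : nat) : R := 2 * INR n + 1.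
Definition theta_coef (tau : C) (n : nat) : C := (RtoC ((-1)^n) * ppow tau ((INR n + /2)^2))%C.
Definition theta_majorant (tau : C) (rho : R) (n : nat) : R := exp (- nome_decay tau * (INR n + /2)^2 + freq n * rho).

Lemma freq_ge_1 n : 1 <= freq n.
Proof. unfold freq. pose proof (pos_INR n). lra. Qed.

Lemma Cmod_ppow tau s : Cmod (ppow tau s) = exp (- (PI * s * snd tau)).
Proof. unfold ppow. rewrite Cmod_Cexp. f_equal. unfold Cmul, Defs.RtoC, Defs.Ci. cbn [fst snd]. ring. Qed.

Lemma Cmod_theta_coef tau n : Cmod (theta_coef tau n) = exp (- nome_decay tau * (INR n + /2)^2).
Proof. unfold theta_coef. rewrite Cmod_mult, Cmod_R, pow_1_abs, Cmod_ppow, Rmult_1_l. unfold nome_decay. f_equal. ring. Qed.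

Lemma exp_m_INR n : exp (- INR n) = exp (-1) ^ n.
Proof. induction n. simpl. rewrite Ropp_0, exp_0. auto.
  rewrite S_INR. simpl pow. rewrite <- IHn, <- exp_plus. f_equal. ring. Qed.

(* The majorant exp(-a (n+1/2)^2 + (2n+1) rho) of the n-th term on |z| <= rho
   is summable: the Gaussian decay beats the exponential growth. *)
Lemma ex_theta_majorant tau rho : 0 < snd tau -> ex_series (theta_majorant tau rho).
Proof.
  intros Ht. assert (Ha : 0 < nome_decay tau) by (unfold nome_decay; pose proof PI_RGT_0; nra).
  set (K := (2 * rho + 1)^2 / (4 * nome_decay tau)).
  assert (Hq : Rabs (exp (-1)) < 1).
  { rewrite Rabs_right by (left; apply exp_pos). rewrite <- exp_0. apply exp_increasing. lra. }
  apply (ex_series_dominated _ (fun n => exp K * exp (-1) ^ n)).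
  - intro n. rewrite Rabs_right by (left; apply exp_pos). unfold theta_majorant.
    rewrite <- exp_m_INR, <- exp_plus. 
    destruct (Rle_lt_or_eq_dec (- nome_decay tau * (INR n + / 2) ^ 2 + freq n * rho) (K + - INR n)) as [h|h].
    + unfold K, freq. set (x := INR n).
      assert (E : K + - x - (- nome_decay tau * (x + /2)^2 + (2 * x + 1) * rho) = (2 * nome_decay tau * (x + /2) - (2*rho+1))^2 / (4 * nome_decay tau) + /2).
      { unfold K. field. lra. }
      assert (0 <= (2 * nome_decay tau * (x + /2) - (2*rho+1))^2 / (4 * nome_decay tau)).
      { apply Rmult_le_pos. apply pow2_ge_0. left. apply Rinv_0_lt_compat. lra. }
      unfold K in E. lra.
    + left. apply exp_increasing; auto.
    + rewrite h. lra.
  - apply (@ex_series_scal R_AbsRing R_NormedModule). apply ex_series_geom. auto.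
Qed.

Definition theta_majorant_sum (tau : C) (rho : R) : R := Series (theta_majorant tau rho).
Lemma theta_majorant_sum_correct tau rho : 0 < snd tau -> is_series (theta_majorant tau rho) (theta_majorant_sum tau rho).
Proof. intro. apply ex_series_Series. apply ex_theta_majorant; auto. Qed.
Lemma theta_majorant_ge0 tau rho n : 0 <= theta_majorant tau rho n.
Proof. left; apply exp_pos. Qed.
Lemma theta_majorant_sum_ge0 tau rho : 0 < snd tau -> 0 <= theta_majorant_sum tau rho.
Proof. intro. eapply series_nonneg. apply theta_majorant_sum_correct; auto. apply theta_majorant_ge0. Qed.

Lemma Cmod_freq_mul n (z : C) : Cmod (RtoC (freq n) * z)%C = freq n * Cmod z.
Proof. rewrite Cmod_mult, Cmod_R, Rabs_right. auto. pose proof (freq_ge_1 n); lra. Qed.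

Definition theta_term (tau z : Cx) (n : nat) : Cx :=
  Cmul (Defs.RtoC ((-1) ^ n)) (Cmul (ppow tau ((INR n + / 2) ^ 2)) (Csin (Cmul (Defs.RtoC (2 * INR n + 1)) z))).

Lemma theta_term_eq tau z n : theta_term tau z n = (theta_coef tau n * Csin (RtoC (freq n) * z))%C.
Proof. unfold theta_term, theta_coef, freq. cnorm. toC. ring. Qed.

Lemma theta_eq tau z : theta tau z = (RtoC 2 * Cseries (theta_term tau z))%C.
Proof. reflexivity. Qed.

Lemma theta_coef_majorant tau n rho : Cmod (theta_coef tau n) * exp (freq n * rho) = theta_majorant tau rho n.
Proof. rewrite Cmod_theta_coef. unfold theta_majorant. rewrite <- exp_plus. auto. Qed.

(* |sin w| <= e^{|w|}, so the majorant dominates the theta series. *)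
Lemma theta_term_bound tau z n : Cmod (theta_term tau z n) <= theta_majorant tau (Cmod z) n.
Proof.
  rewrite theta_term_eq, Cmod_mult, <- theta_coef_majorant. apply Rmult_le_compat_l. apply Cmod_ge_0.
  rewrite <- Cmod_freq_mul. apply Cmod_Csin_le.
Qed.

Lemma theta_term_summable tau z : 0 < snd tau -> is_Cseries (theta_term tau z) (Cseries (theta_term tau z)).
Proof.
  intro Ht. destruct (is_Cseries_dominated (theta_term tau z) (theta_majorant tau (Cmod z))) as [l Hl].
  apply theta_term_bound. apply ex_theta_majorant; auto.
  rewrite (is_Cseries_value _ _ Hl). auto.
Qed.

(* sin_deriv k v is the k-th derivative of sin at v, written with
   exponentials; theta_deriv tau z0 k is the k-th derivative of theta at z0,
   obtained by termwise differentiation.  They are the Taylor coefficients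
   of theta at z0. *)
Definition sin_deriv (k : nat) (v : C) : C := ((Cpown Ci k * Cexp (Ci * v)%C - Cpown (- Ci)%C k * Cexp (- (Ci * v))%C) * neg_half_i)%C.

Lemma sin_deriv_0 v : sin_deriv 0 v = Csin v.
Proof. unfold sin_deriv, neg_half_i. rewrite CsinE. simpl Cpown. toC. ring. Qed.

Lemma Cmod_sin_deriv k v : Cmod (sin_deriv k v) <= exp (Cmod v).
Proof.
  unfold sin_deriv. rewrite Cmod_mult, Cmod_neg_half_i.
  pose proof (Cmod_triangle (Cpown Ci k * Cexp (Ci * v)%C)%C (- (Cpown (- Ci)%C k * Cexp (- (Ci * v))%C))%C).
  rewrite Cmod_opp, !Cmod_mult, !Cmod_Cpown, Cmod_opp, Cmod_Ci, pow1, !Rmult_1_l in H.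
  pose proof (Cmod_Cexp_le (Ci * v)%C). pose proof (Cmod_Cexp_le (- (Ci * v))%C).
  rewrite Cmod_opp, Cmod_Ci_mul in *. unfold Cminus. 
  pose proof (Cmod_ge_0 (Cpown Ci k * Cexp (Ci * v)%C - Cpown (- Ci)%C k * Cexp (- (Ci * v))%C)%C).
  eapply Rle_trans; [apply Rmult_le_compat_r; [lra| exact H]|]. lra.
Qed.

Definition theta_deriv_term (tau z0 : C) (k n : nat) : C := (theta_coef tau n * Cpown (RtoC (freq n)) k * sin_deriv k (RtoC (freq n) * z0)%C)%C.
Definition theta_deriv (tau z0 : C) (k : nat) : C := (RtoC 2 * Cseries (theta_deriv_term tau z0 k))%C.

(* Using (2n+1)^k <= k! e^{2n+1}, the k-th derivative series is dominated
   by k! times the majorant at radius 1 + |z0|. *)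
Lemma theta_deriv_term_bound tau z0 k n : Cmod (theta_deriv_term tau z0 k n) <= INR (fact k) * theta_majorant tau (1 + Cmod z0) n.
Proof.
  unfold theta_deriv_term. rewrite !Cmod_mult, Cmod_Cpown, Cmod_R, Rabs_right by (pose proof (freq_ge_1 n); lra).
  rewrite <- theta_coef_majorant. 
  pose proof (Cmod_sin_deriv k (RtoC (freq n) * z0)%C). rewrite Cmod_freq_mul in H.
  pose proof (pow_fact_le_exp (freq n) k ltac:(pose proof (freq_ge_1 n); lra)).
  assert (HF : 0 < INR (fact k)) by apply INR_fact_lt_0.
  assert (freq n ^ k <= INR (fact k) * exp (freq n)).
  { unfold Rdiv in H0. apply (Rmult_le_compat_r (INR (fact k))) in H0; [|lra].
    rewrite Rmult_assoc, Rinv_l in H0 by lra. lra. }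
  replace (freq n * (1 + Cmod z0)) with (freq n + freq n * Cmod z0) by ring. rewrite exp_plus.
  pose proof (Cmod_ge_0 (theta_coef tau n)). pose proof (Cmod_ge_0 (sin_deriv k (RtoC (freq n) * z0)%C)).
  pose proof (pow_le (freq n) k ltac:(pose proof (freq_ge_1 n); lra)).
  assert (Cmod (theta_coef tau n) * freq n ^ k <= Cmod (theta_coef tau n) * (INR (fact k) * exp (freq n))) by (apply Rmult_le_compat_l; auto).
  apply Rle_trans with (Cmod (theta_coef tau n) * (INR (fact k) * exp (freq n)) * exp (freq n * Cmod z0)).
  - apply Rmult_le_compat; auto. apply Rmult_le_pos; auto.
  - right. ring.
Qed.

Lemma theta_deriv_term_summable tau z0 k : 0 < snd tau -> is_Cseries (theta_deriv_term tau z0 k) (Cseries (theta_deriv_term tau z0 k)).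
Proof.
  intro Ht. destruct (is_Cseries_dominated (theta_deriv_term tau z0 k) (fun n => INR (fact k) * theta_majorant tau (1 + Cmod z0) n)) as [l Hl].
  apply theta_deriv_term_bound. apply (@ex_series_scal R_AbsRing R_NormedModule). apply ex_theta_majorant; auto.
  rewrite (is_Cseries_value _ _ Hl). auto.
Qed.

(** * Taylor expansion of theta *)

(* Taylor formula for sin, read off from the one for exp. *)
Lemma sin_taylor_poly_exp v x K :
  Csum (S K) (fun k => sin_deriv k v * Cpown x k * RtoC (/ INR (fact k)))%C =
  ((Cexp (Ci * v)%C * exp_taylor_poly (Ci * x)%C K - Cexp (- (Ci * v))%C * exp_taylor_poly (- (Ci * x))%C K) * neg_half_i)%C.
Proof.
  unfold exp_taylor_poly. induction K.
  - rewrite !Csum_S. change (Csum 0 ?f) with C0. unfold sin_deriv. cbn [Cpown]. cnorm. toC. ring.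
  - rewrite (Csum_S (S K)), IHK, (Csum_S (S K) (fun k => Cpown (Ci * x)%C k * _)%C), (Csum_S (S K) (fun k => Cpown (- (Ci * x))%C k * _)%C).
    replace (- (Ci * x))%C with (- Ci * x)%C by (toC; ring).
    rewrite !Cpown_mul. unfold sin_deriv. toC. ring.
Qed.

Lemma sin_taylor_remainder v x K :
  Cmod (Csin (v + x)%C - Csum (S K) (fun k => sin_deriv k v * Cpown x k * RtoC (/ INR (fact k)))%C)%C
  <= 4 * exp (Cmod v) * (Cmod x ^ S K * exp (Cmod x) / INR (fact (S K))).
Proof.
  rewrite sin_taylor_poly_exp, CsinE.
  replace (Ci * (v + x))%C with (Ci * v + Ci * x)%C by (toC; ring).
  replace (- (Ci * v + Ci * x))%C with (- (Ci * v) + - (Ci * x))%C by (toC; ring).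
  rewrite !Cexp_add.
  set (X := Cmod x ^ S K * exp (Cmod x) / INR (fact (S K))).
  pose proof (Cexp_taylor_bound (Ci * x)%C K) as T1. pose proof (Cexp_taylor_bound (- (Ci * x))%C K) as T2.
  rewrite Cmod_opp, Cmod_Ci_mul in T2. rewrite Cmod_Ci_mul in T1. fold X in T1, T2.
  match goal with |- Cmod ?e <= _ => replace e with
    ((Cexp (Ci * v)%C * (Cexp (Ci * x)%C - exp_taylor_poly (Ci * x)%C K) - Cexp (- (Ci * v))%C * (Cexp (- (Ci * x))%C - exp_taylor_poly (- (Ci * x))%C K)) * neg_half_i)%C
    by (unfold neg_half_i; toC; ring) end.
  rewrite Cmod_mult, Cmod_neg_half_i.
  pose proof (Cmod_triangle (Cexp (Ci * v)%C * (Cexp (Ci * x)%C - exp_taylor_poly (Ci * x)%C K))%C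
                (- (Cexp (- (Ci * v))%C * (Cexp (- (Ci * x))%C - exp_taylor_poly (- (Ci * x))%C K)))%C) as TR.
  rewrite Cmod_opp, !Cmod_mult in TR.
  pose proof (Cmod_Cexp_le (Ci * v)%C) as E1. pose proof (Cmod_Cexp_le (- (Ci * v))%C) as E2.
  rewrite Cmod_opp, Cmod_Ci_mul in E2. rewrite Cmod_Ci_mul in E1.
  assert (HA : Cmod (Cexp (Ci * v)%C) * Cmod (Cexp (Ci * x)%C - exp_taylor_poly (Ci * x)%C K)%C <= exp (Cmod v) * (4 * X)).
  { apply Rmult_le_compat; auto; apply Cmod_ge_0. }
  assert (HB : Cmod (Cexp (- (Ci * v))%C) * Cmod (Cexp (- (Ci * x))%C - exp_taylor_poly (- (Ci * x))%C K)%C <= exp (Cmod v) * (4 * X)).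
  { apply Rmult_le_compat; auto; apply Cmod_ge_0. }
  unfold Cminus at 1.
  eapply Rle_trans; [apply Rmult_le_compat_r; [lra| exact TR]|]. lra.
Qed.

Definition theta_taylor_poly (tau z0 w : C) (K : nat) : C :=
  Csum (S K) (fun k => theta_deriv tau z0 k * (Cpown w k * RtoC (/ INR (fact k))))%C.

Definition sin_taylor_at (z0 w : C) (K n : nat) : C :=
  Csum (S K) (fun k => sin_deriv k (RtoC (freq n) * z0)%C * Cpown (RtoC (freq n) * w)%C k
                       * RtoC (/ INR (fact k)))%C.

Lemma theta_taylor_error_series tau z0 w K : 0 < snd tau ->
  exists l : C, (theta tau (z0 + w) - theta_taylor_poly tau z0 w K)%C = (RtoC 2 * l)%C /\
    is_Cseries (fun n => theta_coef tau n *
                 (Csin (RtoC (freq n) * z0 + RtoC (freq n) * w)%C - sin_taylor_at z0 w K n))%C l.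
Proof.
  intros Ht.
  set (ck := fun k => (Cpown w k * RtoC (/ INR (fact k)))%C).
  set (P := Csum (S K) (fun k => Cseries (theta_deriv_term tau z0 k) * ck k)%C).
  exists (Cseries (theta_term tau (z0 + w)%C) - P)%C. split.
  { rewrite theta_eq. unfold P, theta_taylor_poly, theta_deriv.
    rewrite (Csum_ext (S K) _ (fun k => RtoC 2 * (Cseries (theta_deriv_term tau z0 k) * ck k))%C).
    rewrite Csum_scal_l. toC. ring. intros k _. unfold ck. toC. ring. }
  assert (HP : is_Cseries (fun n => theta_coef tau n * sin_taylor_at z0 w K n)%C P).
  { eapply is_Cseries_ext;
      [|apply (is_Cseries_Csum (S K) (fun k n => theta_deriv_term tau z0 k n * ck k)%C)].
    - intro n. cbv beta. unfold sin_taylor_at. rewrite <- Csum_scal_l.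
      apply Csum_ext. intros k _. unfold theta_deriv_term, ck. rewrite Cpown_mul. toC. ring.
    - intros k _. apply is_Cseries_scal_r, theta_deriv_term_summable; auto. }
  eapply is_Cseries_ext; [|exact (is_Cseries_minus _ _ _ _ (theta_term_summable tau (z0 + w)%C Ht) HP)].
  intro n. cbv beta. rewrite theta_term_eq.
  replace (RtoC (freq n) * (z0 + w))%C with (RtoC (freq n) * z0 + RtoC (freq n) * w)%C by (toC; ring).
  toC. ring.
Qed.

(* Remainder bound, for any termwise majorant M e^{(2n+1) rho} of the sine
   remainders; the two corollaries below choose M and rho. *)
Lemma theta_taylor_remainder (tau z0 w : C) (K : nat) (M rho : R) : 0 < snd tau -> 0 <= M ->
  (forall n, 4 * exp (freq n * Cmod z0) * ((freq n * Cmod w) ^ S K * exp (freq n * Cmod w) / INR (fact (S K)))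
             <= M * exp (freq n * rho)) ->
  Cmod (theta tau (z0 + w)%C - theta_taylor_poly tau z0 w K)%C <= 4 * (M * theta_majorant_sum tau rho).
Proof.
  intros Ht HM HB.
  destruct (theta_taylor_error_series tau z0 w K Ht) as [l [E Hl]].
  assert (HBn : forall n, Cmod (theta_coef tau n *
      (Csin (RtoC (freq n) * z0 + RtoC (freq n) * w)%C - sin_taylor_at z0 w K n))%C
      <= M * theta_majorant tau rho n).
  { intro n. rewrite Cmod_mult. unfold sin_taylor_at.
    pose proof (sin_taylor_remainder (RtoC (freq n) * z0)%C (RtoC (freq n) * w)%C K) as R.
    rewrite !Cmod_freq_mul in R. rewrite <- theta_coef_majorant.
    replace (M * (Cmod (theta_coef tau n) * exp (freq n * rho)))
      with (Cmod (theta_coef tau n) * (M * exp (freq n * rho))) by ring.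
    apply Rmult_le_compat_l. apply Cmod_ge_0. eapply Rle_trans; [exact R|]. apply HB. }
  assert (HS : is_series (fun n => M * theta_majorant tau rho n) (M * theta_majorant_sum tau rho))
    by (apply series_scal, theta_majorant_sum_correct; auto).
  pose proof (is_Cseries_bound _ _ _ _ Hl HBn HS) as HC.
  rewrite E, Cmod_mult, Cmod_R, Rabs_right by lra. lra.
Qed.

Lemma theta_deriv_0 tau z0 : theta_deriv tau z0 0 = theta tau z0.
Proof.
  unfold theta_deriv. rewrite theta_eq. f_equal. f_equal. apply functional_extensionality. intro n.
  unfold theta_deriv_term. rewrite theta_term_eq, sin_deriv_0. simpl Cpown. toC. ring.
Qed.

Lemma theta_taylor_remainder_small tau z0 w K : 0 < snd tau -> Cmod w <= 1 ->
  Cmod (theta tau (z0 + w)%C - theta_taylor_poly tau z0 w K)%C <= 16 * (Cmod w ^ S K * theta_majorant_sum tau (Cmod z0 + 2)).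
Proof.
  intros Ht Hw. replace (16 * (Cmod w ^ S K * theta_majorant_sum tau (Cmod z0 + 2))) with (4 * ((4 * Cmod w ^ S K) * theta_majorant_sum tau (Cmod z0 + 2))) by ring.
  apply theta_taylor_remainder; auto. pose proof (pow_le _ (S K) (Cmod_ge_0 w)). lra.
  intro n. pose proof (freq_ge_1 n) as Hl. pose proof (Cmod_ge_0 w) as Hw0.
  rewrite Rpow_mult_distr.
  pose proof (pow_fact_le_exp (freq n) (S K) ltac:(lra)) as H1.
  assert (H2 : exp (freq n * Cmod w) <= exp (freq n)) by (apply exp_le_mono; nra).
  replace (freq n * (Cmod z0 + 2)) with (freq n * Cmod z0 + freq n + freq n) by ring.
  rewrite !exp_plus.
  assert (HF : 0 < INR (fact (S K))) by apply INR_fact_lt_0.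
  replace (freq n ^ S K * Cmod w ^ S K * exp (freq n * Cmod w) / INR (fact (S K)))
    with (Cmod w ^ S K * (freq n ^ S K / INR (fact (S K))) * exp (freq n * Cmod w)) by (field; lra).
  pose proof (pow_le _ (S K) Hw0). pose proof (exp_pos (freq n * Cmod z0)). pose proof (exp_pos (freq n * Cmod w)).
  assert (0 <= freq n ^ S K / INR (fact (S K))) by (apply Rmult_le_pos; [apply pow_le; lra| left; apply Rinv_0_lt_compat; auto]).
  assert (Cmod w ^ S K * (freq n ^ S K / INR (fact (S K))) * exp (freq n * Cmod w) <= Cmod w ^ S K * exp (freq n) * exp (freq n)).
  { apply Rmult_le_compat; [apply Rmult_le_pos; auto | lra | apply Rmult_le_compat_l; auto | auto]. }
  assert (HX : 4 * exp (freq n * Cmod z0) * (Cmod w ^ S K * (freq n ^ S K / INR (fact (S K))) * exp (freq n * Cmod w))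
    <= 4 * exp (freq n * Cmod z0) * (Cmod w ^ S K * exp (freq n) * exp (freq n))).
  { apply Rmult_le_compat_l; auto. lra. }
  eapply Rle_trans; [exact HX|]. right. ring.
Qed.

Lemma theta_taylor_remainder_geometric tau z0 w K : 0 < snd tau ->
  Cmod (theta tau (z0 + w)%C - theta_taylor_poly tau z0 w K)%C <= 16 * ((/2) ^ S K * theta_majorant_sum tau (Cmod z0 + 3 * Cmod w)).
Proof.
  intros Ht. replace (16 * ((/2) ^ S K * theta_majorant_sum tau (Cmod z0 + 3 * Cmod w))) with (4 * ((4 * (/2) ^ S K) * theta_majorant_sum tau (Cmod z0 + 3 * Cmod w))) by ring.
  apply theta_taylor_remainder; auto. pose proof (pow_le (/2) (S K) ltac:(lra)). lra.
  intro n. pose proof (freq_ge_1 n) as Hl. pose proof (Cmod_ge_0 w) as Hw0.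
  pose proof (pow_fact_le_exp (2 * (freq n * Cmod w)) (S K) ltac:(nra)) as H1.
  rewrite Rpow_mult_distr in H1.
  replace (freq n * (Cmod z0 + 3 * Cmod w)) with (freq n * Cmod z0 + (2 * (freq n * Cmod w) + freq n * Cmod w)) by ring.
  rewrite !exp_plus.
  assert (HF : 0 < INR (fact (S K))) by apply INR_fact_lt_0.
  assert (E : (freq n * Cmod w) ^ S K / INR (fact (S K)) = (/2)^S K * (2 ^ S K * (freq n * Cmod w) ^ S K / INR (fact (S K)))).
  { assert (H22 : (/2)^S K * 2^S K = 1) by (rewrite <- Rpow_mult_distr; replace (/2*2) with 1 by field; apply pow1).
    unfold Rdiv. rewrite <- !Rmult_assoc, H22. ring. }
  replace ((freq n * Cmod w) ^ S K * exp (freq n * Cmod w) / INR (fact (S K))) with ((freq n * Cmod w) ^ S K / INR (fact (S K)) * exp (freq n * Cmod w)) by (field; lra).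
  rewrite E.
  pose proof (pow_le (/2) (S K) ltac:(lra)). pose proof (exp_pos (freq n * Cmod z0)). pose proof (exp_pos (freq n * Cmod w)).
  assert ((/ 2) ^ S K * (2 ^ S K * (freq n * Cmod w) ^ S K / INR (fact (S K))) <= (/2)^S K * exp (2 * (freq n * Cmod w))).
  { apply Rmult_le_compat_l; auto. }
  assert (HX : 4 * exp (freq n * Cmod z0) * ((/ 2) ^ S K * (2 ^ S K * (freq n * Cmod w) ^ S K / INR (fact (S K))) * exp (freq n * Cmod w))
     <= 4 * exp (freq n * Cmod z0) * ((/2)^S K * exp (2 * (freq n * Cmod w)) * exp (freq n * Cmod w))).
  { apply Rmult_le_compat_l. lra. apply Rmult_le_compat_r; lra. }
  eapply Rle_trans; [exact HX|]. right. ring.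
Qed.

Lemma theta_taylor_poly_0 tau z0 w : theta_taylor_poly tau z0 w 0 = theta tau z0.
Proof. unfold theta_taylor_poly. rewrite Csum_S. change (Csum 0 ?f) with C0. rewrite theta_deriv_0. simpl Cpown. simpl fact.
  cnorm. replace (/ INR 1) with 1 by (simpl; field). toC. ring. Qed.

Lemma theta_lip tau z0 w : 0 < snd tau -> Cmod w <= 1 ->
  Cmod (theta tau (z0 + w)%C - theta tau z0)%C <= 16 * theta_majorant_sum tau (Cmod z0 + 2) * Cmod w.
Proof.
  intros Ht Hw. pose proof (theta_taylor_remainder_small tau z0 w 0 Ht Hw). rewrite theta_taylor_poly_0 in H. simpl pow in H. 
  replace (Cmod w * 1) with (Cmod w) in H by ring. lra.
Qed.

Lemma theta_cont tau z0 : 0 < snd tau ->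
  forall eps, 0 < eps -> exists d, 0 < d /\ forall z, Cmod (z - z0)%C < d -> Cmod (theta tau z - theta tau z0)%C < eps.
Proof.
  intros Ht eps He. set (A := 16 * theta_majorant_sum tau (Cmod z0 + 2) + 1).
  assert (HA : 0 < A) by (unfold A; pose proof (theta_majorant_sum_ge0 tau (Cmod z0 + 2) Ht); lra).
  exists (Rmin 1 (eps / A)). split. apply Rmin_pos; [lra| apply Rdiv_lt_0_compat; auto].
  intros z Hz. replace z with (z0 + (z - z0))%C by (toC; ring).
  assert (H1 : Cmod (z - z0)%C <= 1) by (pose proof (Rmin_l 1 (eps/A)); lra).
  pose proof (theta_lip tau z0 (z - z0)%C Ht H1).
  assert (Cmod (z - z0)%C < eps / A) by (pose proof (Rmin_r 1 (eps/A)); lra).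
  assert (A * Cmod (z - z0)%C < eps).
  { apply (Rmult_lt_compat_l A) in H0; auto. unfold Rdiv in H0. rewrite <- Rmult_assoc, (Rmult_comm A eps), Rmult_assoc, Rinv_r, Rmult_1_r in H0 by lra. auto. }
  pose proof (Cmod_ge_0 (z - z0)%C).
  unfold A in H2. nra.
Qed.

(** * Zeros of theta are isolated *)

Lemma least_witness (P : nat -> Prop) : (exists n, P n) -> exists n, P n /\ forall m, (m < n)%nat -> ~ P m.
Proof.
  intros [n Hn]. induction n as [n IH] using (well_founded_induction Wf_nat.lt_wf).
  destruct (classic (exists m, (m < n)%nat /\ P m)) as [[m [Hm Pm]]|H].
  - apply (IH m Hm Pm).
  - exists n. split; auto. intros m Hm Pm. apply H. exists m. auto.
Qed.

Lemma theta_taylor_poly_leading tau z0 w K : (forall k, (k < K)%nat -> theta_deriv tau z0 k = RtoC 0) ->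
  theta_taylor_poly tau z0 w K = (theta_deriv tau z0 K * (Cpown w K * RtoC (/ INR (fact K))))%C.
Proof.
  intro H. unfold theta_taylor_poly. rewrite Csum_S.
  rewrite (Csum_ext K _ (fun _ => RtoC 0)). rewrite Csum_zero. cnorm. toC. ring.
  intros k Hk. rewrite H; auto. toC. ring.
Qed.

(* If some derivative at z0 is nonzero, the first nonzero one, D_K, dominates:
   theta(z0 + w) = D_K w^K / K! + O(|w|^{K+1}), so theta has no zero in a
   punctured disc around z0. *)
Lemma theta_zero_isolated_of_deriv tau z0 : 0 < snd tau -> (exists K, theta_deriv tau z0 K <> RtoC 0) ->
  exists d, 0 < d /\ forall w, 0 < Cmod w < d -> theta tau (z0 + w)%C <> RtoC 0.
Proof.
  intros Ht HK. destruct (least_witness _ HK) as [K [HDK Hmin]].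
  assert (Hz : forall k, (k < K)%nat -> theta_deriv tau z0 k = RtoC 0).
  { intros k Hk. apply NNPP. intro. apply (Hmin k Hk); auto. }
  set (A := theta_majorant_sum tau (Cmod z0 + 2)). assert (HA : 0 <= A) by (apply theta_majorant_sum_ge0; auto).
  set (D := Cmod (theta_deriv tau z0 K)). assert (HD : 0 < D) by (apply Cmod_gt_0; auto).
  set (F := INR (fact K)). assert (HF : 0 < F) by apply INR_fact_lt_0.
  exists (Rmin 1 (D / (F * (16 * A + 1)))). split.
  { apply Rmin_pos. lra. apply Rdiv_lt_0_compat; auto. apply Rmult_lt_0_compat; lra. }
  intros w [Hw0 Hw] E.
  assert (Hw1 : Cmod w <= 1) by (pose proof (Rmin_l 1 (D / (F * (16 * A + 1)))); lra).
  assert (Hw2 : Cmod w < D / (F * (16 * A + 1))) by (pose proof (Rmin_r 1 (D / (F * (16 * A + 1)))); lra).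
  pose proof (theta_taylor_remainder_small tau z0 w K Ht Hw1) as R. fold A in R.
  rewrite (theta_taylor_poly_leading tau z0 w K Hz), E in R.
  replace (RtoC 0 - theta_deriv tau z0 K * (Cpown w K * RtoC (/ INR (fact K))))%C
    with (- (theta_deriv tau z0 K * (Cpown w K * RtoC (/ INR (fact K)))))%C in R by (toC; ring).
  rewrite Cmod_opp, !Cmod_mult, Cmod_Cpown, Cmod_R, Rabs_right in R by (left; apply Rinv_0_lt_compat; auto).
  fold D F in R. simpl pow in R.
  (* R : D |w|^K / K! <= 16 |w|^{K+1} A, contradicting the choice of |w|. *)
  assert (HwK : 0 < Cmod w ^ K) by (apply pow_lt; auto).
  assert (H16 : 16 * A * Cmod w * F < D).
  { apply Rlt_div_r in Hw2; [|apply Rmult_lt_0_compat; lra]. nra. }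
  assert (D * (Cmod w ^ K * / F) * F = D * Cmod w ^ K) by (field; lra).
  assert (16 * (Cmod w * Cmod w ^ K * A) * F = (16 * A * Cmod w * F) * Cmod w ^ K) by ring.
  apply (Rmult_le_compat_r F) in R; [|lra]. nra.
Qed.

(* If all derivatives at z0 vanish, the geometric remainder bound forces
   theta to vanish everywhere. *)
Lemma theta_vanishes_of_derivs tau z0 : 0 < snd tau -> (forall K, theta_deriv tau z0 K = RtoC 0) ->
  forall w, theta tau (z0 + w)%C = RtoC 0.
Proof.
  intros Ht HK w. apply Cmod_eq_0. apply Rle_antisym; [|apply Cmod_ge_0].
  apply Rnot_lt_le. intro Hpos.
  set (A := theta_majorant_sum tau (Cmod z0 + 3 * Cmod w)). assert (HA : 0 <= A) by (apply theta_majorant_sum_ge0; auto).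
  destruct (pow_lt_1_zero (/2) ltac:(rewrite Rabs_right; lra) (Cmod (theta tau (z0 + w)%C) / (16 * A + 1)))
    as [N HN]. apply Rdiv_lt_0_compat; lra.
  specialize (HN (S N) ltac:(lia)). rewrite Rabs_right in HN by (left; apply pow_lt; lra).
  pose proof (theta_taylor_remainder_geometric tau z0 w N Ht) as R. fold A in R.
  replace (theta_taylor_poly tau z0 w N) with (RtoC 0) in R.
  2:{ unfold theta_taylor_poly. rewrite (Csum_ext _ _ (fun _ => RtoC 0)). symmetry; apply Csum_zero.
      intros k _. rewrite HK. toC. ring. }
  assert (E0 : (theta tau (z0 + w)%C - RtoC 0)%C = theta tau (z0 + w)%C).
  { change (@eq C (theta tau (z0 + w)%C - RtoC 0)%C (theta tau (z0 + w)%C)). ring. }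
  rewrite E0 in R.
  set (T := Cmod (theta tau (z0 + w)%C)) in *.
  assert ((/2)^S N * (16 * A + 1) < T).
  { apply (Rmult_lt_compat_r (16 * A + 1)) in HN; [|lra]. unfold Rdiv in HN.
    rewrite Rmult_assoc, Rinv_l, Rmult_1_r in HN by lra. auto. }
  assert (0 < (/2)^S N) by (apply pow_lt; lra).
  nra.
Qed.

(* Testing the sine series of theta against the N points s_j = j pi / N:
   sine_moment N n = sum_{j<N} sin(s_j) sin((2n+1) s_j) equals N/2 for n = 0,
   vanishes for 1 <= n <= N-2 and is bounded by N. *)

Lemma cos_sum_telescope N a : Rsum_lt N (fun j => cos (INR j * (2 * a))) * (2 * sin a) = sin ((2 * INR N - 1) * a) + sin a.
Proof.
  induction N; simpl Rsum_lt.
  - simpl. replace ((2 * 0 - 1) * a) with (- a) by ring. rewrite sin_neg. ring.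
  - rewrite Rmult_plus_distr_r, IHN, S_INR.
    replace ((2 * (INR N + 1) - 1) * a) with (INR N * (2 * a) + a) by ring.
    replace ((2 * INR N - 1) * a) with (INR N * (2 * a) - a) by ring.
    rewrite sin_plus, sin_minus. ring.
Qed.

Lemma cos_sum_zero (N q : nat) : (0 < q)%nat -> (q < N)%nat ->
  Rsum_lt N (fun j => cos (INR j * (2 * (PI * INR q / INR N)))) = 0.
Proof.
  intros H1 H2. set (a := PI * INR q / INR N).
  assert (HN : 0 < INR N) by (apply lt_0_INR; lia).
  assert (Ha : 0 < sin a).
  { apply sin_gt_0; unfold a.
    - apply Rdiv_lt_0_compat; auto. apply Rmult_lt_0_compat. apply PI_RGT_0. apply lt_0_INR; lia.
    - apply Rlt_div_l; auto. apply Rmult_lt_compat_l. apply PI_RGT_0. apply lt_INR; lia. }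
  pose proof (cos_sum_telescope N a) as T.
  replace ((2 * INR N - 1) * a) with (- a + 2 * INR q * PI) in T by (unfold a; field; lra).
  rewrite sin_period, sin_neg in T.
  replace (- sin a + sin a) with 0 in T by ring.
  apply Rmult_integral in T. destruct T; auto. lra.
Qed.

Lemma sin_sin x y : sin x * sin y = / 2 * (cos (y - x) - cos (y + x)).
Proof. rewrite cos_minus, cos_plus. field. Qed.

Definition sine_moment (N n : nat) : R := Rsum_lt N (fun j => sin (INR j * PI / INR N) * sin (freq n * (INR j * PI / INR N))).

Lemma sine_moment_split N n : (0 < N)%nat -> sine_moment N n = / 2 * (Rsum_lt N (fun j => cos (INR j * (2 * (PI * INR n / INR N))))
                                            - Rsum_lt N (fun j => cos (INR j * (2 * (PI * INR (S n) / INR N))))).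
Proof.
  intro HN. assert (0 < INR N) by (apply lt_0_INR; lia).
  unfold sine_moment. rewrite <- Rsum_lt_minus, <- Rsum_lt_scal. apply Rsum_lt_ext. intros j _.
  rewrite sin_sin. unfold freq. rewrite S_INR. f_equal. f_equal; f_equal; field; lra.
Qed.

Lemma sine_moment_0 N : (1 < N)%nat -> sine_moment N 0 = INR N / 2.
Proof.
  intro HN. rewrite sine_moment_split by lia. rewrite (cos_sum_zero N 1) by lia.
  rewrite (Rsum_lt_ext N _ (fun _ => 1)). rewrite Rsum_lt_const. field.
  intros j _. simpl INR. replace (INR j * (2 * (PI * 0 / INR N))) with 0. apply cos_0.
  field. apply not_0_INR. lia.
Qed.

Lemma sine_moment_mid N n : (1 <= n)%nat -> (n + 2 <= N)%nat -> sine_moment N n = 0.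
Proof.
  intros H1 H2. rewrite sine_moment_split by lia. rewrite !cos_sum_zero by lia. ring.
Qed.

Lemma Rabs_sin_le x : Rabs (sin x) <= 1.
Proof. pose proof (SIN_bound x). apply Rabs_le. lra. Qed.

Lemma sine_moment_bound N n : Rabs (sine_moment N n) <= INR N.
Proof. apply Rsum_lt_abs. intro j. rewrite Rabs_mult. pose proof (Rabs_sin_le (INR j * PI / INR N)) as A. 
  pose proof (Rabs_sin_le (freq n * (INR j * PI / INR N))) as B. pose proof (Rabs_pos (sin (INR j * PI / INR N))).
  pose proof (Rabs_pos (sin (freq n * (INR j * PI / INR N)))). nra. Qed.

(* If theta vanished on the real line, the weighted sums of theta(s_j)
   would give sum_n theta_coef n * sine_moment N n = 0. *)
Lemma theta_real_zero_moments tau N : 0 < snd tau ->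
  (forall s, theta tau (RtoC s) = RtoC 0) ->
  is_Cseries (fun n => theta_coef tau n * RtoC (sine_moment N n))%C (RtoC 0).
Proof.
  intros Ht H0.
  set (sj := fun j : nat => INR j * PI / INR N).
  assert (Z : forall j, Cseries (theta_term tau (RtoC (sj j))) = RtoC 0).
  { intro j. specialize (H0 (sj j)). rewrite theta_eq in H0.
    apply (f_equal Cmod) in H0. rewrite Cmod_mult, Cmod_R, Cmod_0, Rabs_right in H0 by lra.
    apply Cmod_eq_0. lra. }
  assert (S1 : is_Cseries (fun n => Csum N (fun j => RtoC (sin (sj j)) * theta_term tau (RtoC (sj j)) n)%C)
                    (Csum N (fun j => RtoC (sin (sj j)) * Cseries (theta_term tau (RtoC (sj j))))%C)).
  { apply (is_Cseries_Csum N (fun j n => RtoC (sin (sj j)) * theta_term tau (RtoC (sj j)) n)%C). intros j _.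
    apply is_Cseries_scal, theta_term_summable; auto. }
  rewrite (Csum_ext N _ (fun _ => RtoC 0)), Csum_zero in S1.
  2:{ intros; cbv beta; rewrite Z. apply Cmult_0_r. }
  eapply is_Cseries_ext; [|exact S1]. intro n. cbv beta. unfold sine_moment.
  rewrite <- Csum_RtoC, <- Csum_scal_l. apply Csum_ext. intros j _.
  rewrite theta_term_eq.
  replace (RtoC (freq n) * RtoC (sj j))%C with (RtoC (freq n * sj j))
    by (unfold RtoC, Cmult; simpl; f_equal; ring).
  rewrite Csin_real, RtoC_mult. unfold sj. toC. ring.
Qed.

Lemma theta_not_zero_real tau : 0 < snd tau -> ~ (forall s, theta tau (RtoC s) = RtoC 0).
Proof.
  intros Ht H0.
  set (c0 := Cmod (theta_coef tau 0)).
  assert (Hc0 : 0 < c0) by (unfold c0; rewrite Cmod_theta_coef; apply exp_pos).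
  pose proof (theta_majorant_sum_correct tau 0 Ht) as HA. set (A := theta_majorant_sum tau 0) in *.
  (* choose N so that the tail of the majorant from N - 1 on is below c0 / 8 *)
  destruct (is_series_Un_cv _ _ HA (c0 / 8)) as [N0 HN0]. lra.
  set (M := S N0). set (N := S M).
  assert (HN : (1 < N)%nat) by (unfold N, M; lia).
  assert (HNp : 0 < INR N) by (apply lt_0_INR; lia).
  set (f := fun n => (theta_coef tau n * RtoC (sine_moment N n))%C).
  (* the moment series reduces to its 0-th term plus a tail starting at M *)
  pose proof (is_Cseries_shift f (RtoC 0) M (theta_real_zero_moments tau N Ht H0)) as Htail.
  rewrite Csum_first in Htail.
  2: unfold M; lia.
  2:{ intros n Hn1 Hn2. unfold f. rewrite sine_moment_mid by (unfold N; lia). toC. ring. }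
  assert (HB : forall k, Cmod (f (M + k)%nat) <= INR N * theta_majorant tau 0 (M + k)%nat).
  { intro k. unfold f. rewrite Cmod_mult, Cmod_R, <- (theta_coef_majorant tau _ 0), Rmult_0_r, exp_0, Rmult_1_r.
    rewrite Rmult_comm. apply Rmult_le_compat_r. apply Cmod_ge_0. apply sine_moment_bound. }
  assert (HS : is_series (fun k => INR N * theta_majorant tau 0 (M + k)%nat)
                         (INR N * (A - Rsum_lt M (theta_majorant tau 0))))
    by (apply series_scal, series_shift; auto).
  pose proof (is_Cseries_bound _ _ _ _ Htail HB HS) as HC.
  replace (RtoC 0 - f 0%nat)%C with (- f 0%nat)%C in HC by (toC; ring).
  rewrite Cmod_opp in HC. unfold f in HC. rewrite Cmod_mult, Cmod_R, sine_moment_0 in HC by auto. fold c0 in HC.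
  assert (HT : A - Rsum_lt M (theta_majorant tau 0) < c0 / 8).
  { specialize (HN0 N0 (le_n _)). unfold R_dist in HN0. unfold M. rewrite Rsum_lt_sum_f_R0.
    apply Rabs_def2 in HN0. lra. }
  rewrite Rabs_right in HC by (apply Rle_ge; apply Rmult_le_pos; lra).
  nra.
Qed.

Lemma theta_isolated tau z0 : 0 < snd tau ->
  exists d, 0 < d /\ forall w, 0 < Cmod w < d -> theta tau (z0 + w)%C <> RtoC 0.
Proof.
  intro Ht. destruct (classic (exists K, theta_deriv tau z0 K <> RtoC 0)) as [H|H].
  - apply theta_zero_isolated_of_deriv; auto.
  - exfalso. apply (theta_not_zero_real tau Ht). intro s.
    assert (HK : forall K, theta_deriv tau z0 K = RtoC 0)
      by (intro K; apply NNPP; intro; apply H; exists K; auto).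
    pose proof (theta_vanishes_of_derivs tau z0 Ht HK (RtoC s - z0)%C).
    replace (z0 + (RtoC s - z0))%C with (RtoC s) in H0 by (toC; ring). auto.
Qed.

Lemma theta_odd tau z : 0 < snd tau -> theta tau (- z)%C = (- theta tau z)%C.
Proof.
  intro Ht. rewrite !theta_eq.
  rewrite (Cseries_scal (theta_term tau (- z)%C) (theta_term tau z) (RtoC (-1))).
  toC. ring. exists (Cseries (theta_term tau z)). apply theta_term_summable; auto.
  intro n. rewrite !theta_term_eq. replace (RtoC (freq n) * - z)%C with (- (RtoC (freq n) * z))%C by (toC; ring).
  rewrite Csin_neg. toC. ring.
Qed.

Lemma Cexp_freq_PI n :
  Cexp (Ci * (RtoC (freq n) * RtoC PI))%C = RtoC (-1) /\
  Cexp (- (Ci * (RtoC (freq n) * RtoC PI)))%C = RtoC (-1).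
Proof.
  assert (E : freq n * PI = PI + 2 * INR n * PI) by (unfold freq; ring).
  split.
  - replace (Ci * (RtoC (freq n) * RtoC PI))%C with ((0, freq n * PI) : C)
      by (unfold Ci, RtoC, Cmult; simpl; f_equal; ring).
    unfold Cexp; cbn [fst snd]. rewrite exp_0, E, cos_period, sin_period, cos_PI, sin_PI. unfold RtoC. f_equal; ring.
  - replace (- (Ci * (RtoC (freq n) * RtoC PI)))%C with ((0, - (freq n * PI)) : C)
      by (unfold Ci, RtoC, Cmult, Copp; simpl; f_equal; ring).
    unfold Cexp; cbn [fst snd]. rewrite exp_0, cos_neg, sin_neg, E, cos_period, sin_period, cos_PI, sin_PI.
    unfold RtoC. f_equal; ring.
Qed.

(* theta is pi-antiperiodic: every sin((2n+1) z) changes sign. *)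
Lemma theta_shift tau z : 0 < snd tau -> theta tau (z + RtoC PI)%C = (- theta tau z)%C.
Proof.
  intro Ht. rewrite !theta_eq.
  rewrite (Cseries_scal (theta_term tau (z + RtoC PI)%C) (theta_term tau z) (RtoC (-1))).
  toC. ring. exists (Cseries (theta_term tau z)). apply theta_term_summable; auto.
  intro n. rewrite !theta_term_eq. destruct (Cexp_freq_PI n) as [E1 E2].
  rewrite !CsinE.
  replace (Ci * (RtoC (freq n) * (z + RtoC PI)))%C
    with (Ci * (RtoC (freq n) * z) + Ci * (RtoC (freq n) * RtoC PI))%C by (toC; ring).
  replace (- (Ci * (RtoC (freq n) * z) + Ci * (RtoC (freq n) * RtoC PI)))%C
    with (- (Ci * (RtoC (freq n) * z)) + - (Ci * (RtoC (freq n) * RtoC PI)))%C by (toC; ring).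
  rewrite !Cexp_add, E1, E2. toC. ring.
Qed.

Lemma theta_0 tau : theta tau (RtoC 0) = RtoC 0.
Proof.
  rewrite theta_eq.
  rewrite (is_Cseries_value (theta_term tau (RtoC 0)) (RtoC 0)). toC. ring.
  eapply is_Cseries_ext; [|apply is_Cseries_zero]. intro n. rewrite theta_term_eq.
  replace (RtoC (freq n) * RtoC 0)%C with (RtoC 0) by (toC; ring). rewrite Csin_real, sin_0. toC. ring.
Qed.

(** * Limits along a neighbourhood system *)

(* A neighbourhood system on T is a family N d of sets (d > 0 a radius);
   [tends N f L] says f t -> L as t ranges over N d with d -> 0.  We use it
   for punctured discs in C (the limit y -> x + eta) and for coordinate balls
   in C^{2n+1} (openness of the generic set). *)
Definition tends {T : Type} (N : R -> T -> Prop) (f : T -> C) (L : C) : Prop :=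
  forall eps, 0 < eps -> exists d, 0 < d /\ forall t, N d t -> Cmod (f t - L)%C < eps.
Definition shrinking {T : Type} (N : R -> T -> Prop) : Prop :=
  forall d1 d2 t, d1 <= d2 -> N d1 t -> N d2 t.

Section Limits.
Context {T : Type} (N : R -> T -> Prop) (HN : shrinking N).
Lemma tends_const c : tends N (fun _ => c) c.
Proof. intros e He. exists 1. split. lra. intros. replace (c - c)%C with (RtoC 0) by (toC; ring). rewrite Cmod_0. auto. Qed.

Lemma tends_add f g L M : tends N f L -> tends N g M -> tends N (fun t => f t + g t)%C (L + M)%C.
Proof.
  intros Hf Hg e He. destruct (Hf (e/2)) as [d1 [Hd1 H1]]. lra. destruct (Hg (e/2)) as [d2 [Hd2 H2]]. lra.
  exists (Rmin d1 d2). split. apply Rmin_pos; auto. intros t Ht.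
  specialize (H1 t (HN _ _ _ (Rmin_l _ _) Ht)). specialize (H2 t (HN _ _ _ (Rmin_r _ _) Ht)).
  replace (f t + g t - (L + M))%C with ((f t - L) + (g t - M))%C by (toC; ring).
  pose proof (Cmod_triangle (f t - L)%C (g t - M)%C). lra.
Qed.

Lemma tends_opp f L : tends N f L -> tends N (fun t => - f t)%C (- L)%C.
Proof.
  intros Hf e He. destruct (Hf e He) as [d [Hd H]]. exists d. split; auto. intros t Ht.
  replace (- f t - - L)%C with (- (f t - L))%C by (toC; ring). rewrite Cmod_opp. auto.
Qed.

Lemma tends_sub f g L M : tends N f L -> tends N g M -> tends N (fun t => f t - g t)%C (L - M)%C.
Proof. intros. apply tends_add; auto. apply tends_opp; auto. Qed.

Lemma tends_mul f g L M : tends N f L -> tends N g M -> tends N (fun t => f t * g t)%C (L * M)%C.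
Proof.
  intros Hf Hg e He.
  set (a := Cmod L + 1). set (b := Cmod M + 1).
  assert (Ha : 0 < a) by (unfold a; pose proof (Cmod_ge_0 L); lra).
  assert (Hb : 0 < b) by (unfold b; pose proof (Cmod_ge_0 M); lra).
  destruct (Hf (Rmin 1 (e / (2 * b)))) as [d1 [Hd1 H1]].
  { apply Rmin_pos. lra. apply Rdiv_lt_0_compat; lra. }
  destruct (Hg (Rmin 1 (e / (2 * a)))) as [d2 [Hd2 H2]].
  { apply Rmin_pos. lra. apply Rdiv_lt_0_compat; lra. }
  exists (Rmin d1 d2). split. apply Rmin_pos; auto. intros t Ht.
  specialize (H1 t (HN _ _ _ (Rmin_l _ _) Ht)). specialize (H2 t (HN _ _ _ (Rmin_r _ _) Ht)).
  pose proof (Rmin_r 1 (e / (2 * b))) as Hm1.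
  pose proof (Rmin_l 1 (e / (2 * a))) as Hm2. pose proof (Rmin_r 1 (e / (2 * a))) as Hm3.
  assert (Hgb : Cmod (g t) <= b).
  { replace (g t) with ((g t - M) + M)%C by (toC; ring).
    pose proof (Cmod_triangle (g t - M)%C M). unfold b. lra. }
  assert (T1 : Cmod (f t - L)%C * Cmod (g t) < e / 2).
  { apply Rle_lt_trans with (Cmod (f t - L)%C * b).
    apply Rmult_le_compat_l; [apply Cmod_ge_0|auto].
    replace (e / 2) with (e / (2 * b) * b) by (field; lra). apply Rmult_lt_compat_r; lra. }
  assert (T2 : Cmod L * Cmod (g t - M)%C < e / 2).
  { apply Rle_lt_trans with (a * Cmod (g t - M)%C).
    apply Rmult_le_compat_r; [apply Cmod_ge_0| unfold a; lra].
    replace (e / 2) with (a * (e / (2 * a))) by (field; lra). apply Rmult_lt_compat_l; lra. }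
  replace (f t * g t - L * M)%C with ((f t - L) * g t + L * (g t - M))%C by (toC; ring).
  pose proof (Cmod_triangle ((f t - L) * g t)%C (L * (g t - M))%C) as Htri.
  rewrite !Cmod_mult in Htri. lra.
Qed.

Lemma tends_inv f L : L <> RtoC 0 -> tends N f L -> tends N (fun t => / f t)%C (/ L)%C.
Proof.
  intros HL Hf e He.
  assert (Hl : 0 < Cmod L) by (apply Cmod_gt_0; auto).
  set (k := Rmin (Cmod L / 2) (e * (Cmod L * Cmod L) / 2)).
  assert (Hk : 0 < k) by (apply Rmin_pos; [lra| apply Rdiv_lt_0_compat; [apply Rmult_lt_0_compat; nra|lra]]).
  destruct (Hf k Hk) as [d [Hd H]]. exists d. split; auto. intros t Ht. specialize (H t Ht).
  assert (Hk1 : k <= Cmod L / 2) by apply Rmin_l.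
  assert (Hk2 : k <= e * (Cmod L * Cmod L) / 2) by apply Rmin_r.
  assert (H1 : Cmod (f t - L)%C < Cmod L / 2) by lra.
  assert (H2 : Cmod (f t - L)%C < e * (Cmod L * Cmod L) / 2) by lra.
  assert (Hft : Cmod L / 2 < Cmod (f t)).
  { assert (Cmod L <= Cmod (f t - L)%C + Cmod (f t)).
    { pose proof (Cmod_triangle (- (f t - L))%C (f t)). rewrite Cmod_opp in H0.
      replace (- (f t - L) + f t)%C with L in H0 by (toC; ring). auto. }
    lra. }
  assert (Hf0 : f t <> RtoC 0) by (intro E; rewrite E, Cmod_0 in Hft; lra).
  replace (/ f t - / L)%C with ((L - f t) / (f t * L))%C by (toC; field; auto).
  assert (HfL : (f t * L)%C <> RtoC 0).
  { intro E. apply (f_equal Cmod) in E. rewrite Cmod_mult, Cmod_0 in E. nra. }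
  rewrite Cmod_div, Cmod_mult by auto.
  replace (L - f t)%C with (- (f t - L))%C by (toC; ring). rewrite Cmod_opp.
  apply Rlt_div_l. apply Rmult_lt_0_compat; lra.
  assert (Cmod L / 2 * Cmod L <= Cmod (f t) * Cmod L) by (apply Rmult_le_compat_r; lra).
  nra.
Qed.

Lemma tends_theta tau f L : 0 < snd tau -> tends N f L -> tends N (fun t => theta tau (f t)) (theta tau L).
Proof.
  intros Ht Hf e He. destruct (theta_cont tau L Ht e He) as [d1 [Hd1 H1]].
  destruct (Hf d1 Hd1) as [d [Hd H]]. exists d. split; [auto|]. intros t Ht'. apply H1. apply H; auto.
Qed.

Lemma tends_Cprod k (F : T -> nat -> C) (L : nat -> C) :
  (forall i, (i < k)%nat -> tends N (fun t => F t i) (L i)) -> tends N (fun t => Cprod k (F t)) (Cprod k L).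
Proof.
  induction k; intros H.
  - simpl. apply tends_const.
  - simpl. cnorm. apply (tends_mul (fun t => Cprod k (F t)) (fun t => F t k)). apply IHk; auto. apply H; auto.
Qed.

Lemma tends_Csum k (F : T -> nat -> C) (L : nat -> C) :
  (forall i, (i < k)%nat -> tends N (fun t => F t i) (L i)) -> tends N (fun t => Csum k (F t)) (Csum k L).
Proof.
  induction k; intros H.
  - simpl. apply tends_const.
  - simpl. cnorm. apply (tends_add (fun t => Csum k (F t)) (fun t => F t k)). apply IHk; auto. apply H; auto.
Qed.

Lemma tends_Cdet k (M : T -> nat -> nat -> C) (L : nat -> nat -> C) :
  (forall i j, (i < k)%nat -> (j < k)%nat -> tends N (fun t => M t i j) (L i j)) ->
  tends N (fun t => Cdet k (M t)) (Cdet k L).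
Proof.
  revert M L. induction k; intros M L H.
  - simpl. apply tends_const.
  - simpl. apply (tends_Csum (S k) (fun t j => Cmul (Defs.RtoC ((-1)^j)) (Cmul (M t 0%nat j) (Cdet k (minor (M t) j))))).
    intros j Hj. cnorm. apply (tends_mul (fun _ => RtoC ((-1)^j))). apply tends_const.
    apply (tends_mul (fun t => M t 0%nat j)). apply H; lia.
    apply (IHk (fun t => minor (M t) j) (minor L j)). intros i j' Hi Hj'. unfold minor.
    apply H. lia. destruct (Nat.ltb j' j); lia.
Qed.

Lemma tends_ext f g L : (exists d0, 0 < d0 /\ forall t, N d0 t -> f t = g t) -> tends N g L -> tends N f L.
Proof.
  intros [d0 [Hd0 E]] Hg e He. destruct (Hg e He) as [d [Hd H]]. exists (Rmin d d0). split. apply Rmin_pos; auto.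
  intros t Ht. rewrite E. apply H. apply (HN _ _ _ (Rmin_l _ _) Ht). apply (HN _ _ _ (Rmin_r _ _) Ht).
Qed.
End Limits.

Ltac tends_rules HN Ht :=
  repeat first [ apply (tends_theta _ _ _ _ Ht) | apply (tends_mul _ HN) | apply (tends_add _ HN)
               | apply (tends_sub _ HN) | apply tends_opp | apply tends_const ].

(** * Expansion of a determinant along its corner entry *)

Lemma Cdet_S n M :
  Cdet (S n) M = Csum (S n) (fun j => RtoC ((-1)^j) * (M 0%nat j * Cdet n (minor M j)))%C.
Proof. reflexivity. Qed.

Lemma Cdet_ext k M M' : (forall i j, (i < k)%nat -> (j < k)%nat -> M i j = M' i j) -> Cdet k M = Cdet k M'.
Proof.
  revert M M'. induction k; intros M M' H. reflexivity.
  rewrite !Cdet_S. apply Csum_ext. intros j Hj. rewrite H by lia. f_equal. f_equal.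
  apply IHk. intros i j' Hi Hj'. unfold minor. apply H. lia. destruct (Nat.ltb j' j); lia.
Qed.

Definition zero_corner (n : nat) (M : nat -> nat -> C) : nat -> nat -> C :=
  fun i j => if andb (Nat.eqb i n) (Nat.eqb j n) then RtoC 0 else M i j.

Lemma minor_zero_corner_last n M : minor (zero_corner (S n) M) (S n) = minor M (S n).
Proof.
  apply functional_extensionality; intro r; apply functional_extensionality; intro c.
  unfold minor, zero_corner. destruct (Nat.ltb c (S n)) eqn:Hc.
  - apply Nat.ltb_lt in Hc. replace (Nat.eqb c (S n)) with false by (symmetry; apply Nat.eqb_neq; lia).
    rewrite Bool.andb_false_r. auto.
  - apply Nat.ltb_ge in Hc. replace (Nat.eqb (S c) (S n)) with false by (symmetry; apply Nat.eqb_neq; lia).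
    rewrite Bool.andb_false_r. auto.
Qed.

Lemma minor_zero_corner n M j : (j < S n)%nat ->
  minor (zero_corner (S n) M) j = zero_corner n (minor M j).
Proof.
  intro Hj. apply functional_extensionality; intro r; apply functional_extensionality; intro c.
  unfold minor, zero_corner. destruct (Nat.ltb c j) eqn:Hc.
  - apply Nat.ltb_lt in Hc.
    replace (Nat.eqb c n) with false by (symmetry; apply Nat.eqb_neq; lia).
    replace (Nat.eqb c (S n)) with false by (symmetry; apply Nat.eqb_neq; lia).
    rewrite !Bool.andb_false_r. auto.
  - apply Nat.ltb_ge in Hc. simpl Nat.eqb. auto.
Qed.

Lemma Cdet_corner n M : Cdet (S n) M = (Cdet (S n) (zero_corner n M) + M n n * Cdet n M)%C.
Proof.
  revert M. induction n; intro M.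
  - rewrite !Cdet_S. simpl. unfold zero_corner. simpl. cnorm. toC. ring.
  - assert (Hrow0 : forall j, zero_corner (S n) M 0%nat j = M 0%nat j)
      by (intro j; unfold zero_corner; simpl; auto).
    rewrite (Cdet_S (S n) M), (Cdet_S (S n) (zero_corner (S n) M)).
    rewrite (Csum_S (S n) (fun j => RtoC ((-1)^j) * (M 0%nat j * Cdet (S n) (minor M j)))%C).
    rewrite (Csum_S (S n) (fun j => RtoC ((-1)^j) *
      (zero_corner (S n) M 0%nat j * Cdet (S n) (minor (zero_corner (S n) M) j)))%C).
    rewrite Hrow0, minor_zero_corner_last.
    rewrite (Csum_ext (S n) (fun j => RtoC ((-1)^j) * (M 0%nat j * Cdet (S n) (minor M j)))%C
       (fun j => RtoC ((-1)^j) * (zero_corner (S n) M 0%nat j * Cdet (S n) (minor (zero_corner (S n) M) j))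
                 + M (S n) (S n) * (RtoC ((-1)^j) * (M 0%nat j * Cdet n (minor M j))))%C).
    2:{ intros j Hj. rewrite IHn, Hrow0, minor_zero_corner by lia.
        assert (E : minor M j n n = M (S n) (S n)).
        { unfold minor. replace (Nat.ltb n j) with false by (symmetry; apply Nat.ltb_ge; lia). auto. }
        rewrite E. toC. ring. }
    rewrite Csum_plus, Csum_scal_l, <- Cdet_S. toC. ring.
Qed.

(** * Factorisations of h *)

Lemma three_eta : RtoC PI = (eta + eta + eta)%C.
Proof. unfold eta, Defs.RtoC, RtoC, Cplus. cbn [fst snd]. f_equal; field. Qed.

Lemma theta_shift_three_eta tau z : 0 < snd tau -> theta tau (z + (eta + eta + eta))%C = (- theta tau z)%C.
Proof. intro. rewrite <- three_eta. apply theta_shift; auto. Qed.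

Lemma theta_arg tau z w : z = w -> theta tau z = theta tau w.
Proof. intros; subst; auto. Qed.

Lemma hfunE tau x y : hfun tau x y =
  (theta tau (eta + (x - y)) * theta tau (eta + (x + y)) * (theta tau (eta - (x + y)) * theta tau (eta - x + y)))%C.
Proof. reflexivity. Qed.

(* h(a, x + eta), rewritten with theta(z + 3 eta) = -theta(z) and oddness. *)
Lemma hfun_at_shift tau a x : 0 < snd tau -> hfun tau a (x + eta)%C =
  (- (theta tau (a - x) * theta tau (a + x) * theta tau (x - eta + a) * theta tau (x - eta - a)))%C.
Proof.
  intro Ht. rewrite hfunE.
  rewrite (theta_arg tau (eta + (a - (x + eta)))%C (a - x)%C) by (toC; ring).
  rewrite (theta_arg tau (eta + (a + (x + eta)))%C ((x - eta + a) + (eta + eta + eta))%C) by (toC; ring).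
  rewrite (theta_arg tau (eta - (a + (x + eta)))%C (- (a + x))%C) by (toC; ring).
  rewrite (theta_arg tau (eta - a + (x + eta))%C ((x - eta - a) + (eta + eta + eta))%C) by (toC; ring).
  rewrite !theta_shift_three_eta, theta_odd by auto. toC. ring.
Qed.

(* h(x, b), rewritten by oddness so that the factors of the limit appear. *)
Lemma hfun_factor tau x b : 0 < snd tau -> hfun tau x b =
  (- (theta tau (b - (x + eta)) * theta tau (b + (x + eta)) * theta tau (x - eta + b) * theta tau (x - eta - b)))%C.
Proof.
  intro Ht. rewrite hfunE.
  rewrite (theta_arg tau (eta + (x - b))%C (- (b - (x + eta)))%C) by (toC; ring).
  rewrite (theta_arg tau (eta + (x + b))%C (b + (x + eta))%C) by (toC; ring).
  rewrite (theta_arg tau (eta - (x + b))%C (- (x - eta + b))%C) by (toC; ring).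
  rewrite (theta_arg tau (eta - x + b)%C (- (x - eta - b))%C) by (toC; ring).
  rewrite !theta_odd by auto. toC. ring.
Qed.

(* h(x, x + eta) = 0 because of its factor theta(eta + x - (x + eta)) = theta 0. *)
Lemma hfun_pole tau x : hfun tau x (x + eta)%C = RtoC 0.
Proof.
  rewrite hfunE. rewrite (theta_arg tau (eta + (x - (x + eta)))%C (RtoC 0)) by (toC; ring).
  rewrite theta_0. toC. ring.
Qed.

(* [nonzero_near0 f]: f has no zero in some punctured disc around 0.  Closed
   under products; by [theta_isolated] it holds for theta of any
   non-constant affine function. *)
Definition nonzero_near0 (f : C -> C) : Prop := exists d, 0 < d /\ forall s, 0 < Cmod s < d -> f s <> RtoC 0.

Lemma nonzero_near0_mul f g : nonzero_near0 f -> nonzero_near0 g -> nonzero_near0 (fun s => f s * g s)%C.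
Proof.
  intros [d1 [H1 F]] [d2 [H2 G]]. exists (Rmin d1 d2). split. apply Rmin_pos; auto.
  intros s Hs. pose proof (Rmin_l d1 d2). pose proof (Rmin_r d1 d2).
  apply Cmul_nz. apply F; lra. apply G; lra.
Qed.

Lemma nonzero_near0_ext f g : (forall s, f s = g s) -> nonzero_near0 g -> nonzero_near0 f.
Proof. intros E [d [Hd H]]. exists d. split; auto. intros. rewrite E. auto. Qed.

Lemma nonzero_near0_Cprod k (F : C -> nat -> C) : (forall i, (i < k)%nat -> nonzero_near0 (fun s => F s i)) -> nonzero_near0 (fun s => Cprod k (F s)).
Proof.
  induction k; intro H.
  - exists 1. split. lra. intros. simpl. intro E. injection E. lra.
  - eapply nonzero_near0_ext. intro s. apply Cprod_S. apply nonzero_near0_mul. apply IHk; auto. apply H; auto.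
Qed.

Lemma nonzero_near0_theta tau (f : C -> C) c k : 0 < snd tau -> k <> RtoC 0 -> (forall s, f s = c + k * s)%C ->
  nonzero_near0 (fun s => theta tau (f s)).
Proof.
  intros Ht Hk E. destruct (theta_isolated tau c Ht) as [d [Hd H]].
  assert (Hk' : 0 < Cmod k) by (apply Cmod_gt_0; auto).
  exists (d / Cmod k). split. apply Rdiv_lt_0_compat; auto.
  intros s [Hs1 Hs2]. rewrite E. apply H. rewrite Cmod_mult. split.
  apply Rmult_lt_0_compat; auto. apply Rlt_div_r in Hs2; auto. lra.
Qed.

Lemma hfun_nonzero_near_pole tau x : 0 < snd tau ->
  exists d, 0 < d /\ forall y, 0 < Cmod (y - (x + eta))%C < d -> hfun tau x y <> RtoC 0.
Proof.
  intro Ht. set (y0 := (x + eta)%C).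
  assert (nonzero_near0 (fun s => hfun tau x (y0 + s)%C)).
  { eapply nonzero_near0_ext. intro s. apply hfunE.
    apply nonzero_near0_mul; apply nonzero_near0_mul.
    - apply (nonzero_near0_theta tau _ (eta + (x - y0))%C (RtoC (-1))); auto. apply RtoC_nz; lra. intro s; toC; ring.
    - apply (nonzero_near0_theta tau _ (eta + (x + y0))%C (RtoC 1)); auto. apply RtoC_nz; lra. intro s; toC; ring.
    - apply (nonzero_near0_theta tau _ (eta - (x + y0))%C (RtoC (-1))); auto. apply RtoC_nz; lra. intro s; toC; ring.
    - apply (nonzero_near0_theta tau _ (eta - x + y0)%C (RtoC 1)); auto. apply RtoC_nz; lra. intro s; toC; ring. }
  destruct H as [d [Hd H]]. exists d. split; auto. intros y Hy.
  replace y with (y0 + (y - y0))%C by (toC; ring). apply H. auto.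
Qed.

(** * The limit of H_{2m} *)

Definition H_num tau k (u v : nat -> C) : C := Cprod k (fun i => Cprod k (fun j => hfun tau (u i) (v j))).
Definition H_den tau k (u : nat -> C) : C :=
  Cprod k (fun j => Cprod j (fun i => (theta tau (u i - u j) * theta tau (u i + u j))%C)).
Definition H_det tau k (u v : nat -> C) : C := Cdet k (fun i j => Defs.Cinv (hfun tau (u i) (v j))).

Lemma Hfun_factors tau k u v :
  Hfun tau k u v = (H_num tau k u v * / (H_den tau k u * H_den tau k v) * H_det tau k u v)%C.
Proof. reflexivity. Qed.

Lemma put_lt n a x i : (i < n)%nat -> put_at n a x i = a i.
Proof. intro H. unfold put_at. replace (Nat.eqb i n) with false by (symmetry; apply Nat.eqb_neq; lia). auto. Qed.
Lemma put_n n a x : put_at n a x n = x.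
Proof. unfold put_at. rewrite Nat.eqb_refl. auto. Qed.

Definition theta_pair_prod tau n (a : nat -> C) (x : C) : C :=
  Cprod n (fun i => theta tau (a i - x) * theta tau (a i + x))%C.

Lemma H_num_split tau n a b x y :
  H_num tau (S n) (put_at n a x) (put_at n b y) =
  (H_num tau n a b * Cprod n (fun i => hfun tau (a i) y) * Cprod n (fun j => hfun tau x (b j)) * hfun tau x y)%C.
Proof.
  unfold H_num. rewrite Cprod_S.
  rewrite (Cprod_ext n _ (fun i => Cprod n (fun j => hfun tau (a i) (b j)) * hfun tau (a i) y)%C).
  2:{ intros i Hi. rewrite Cprod_S, put_lt, put_n by auto. f_equal. apply Cprod_ext. intros j Hj. rewrite !put_lt; auto. }
  rewrite Cprod_mul, Cprod_S, put_n, put_n.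
  rewrite (Cprod_ext n (fun j => hfun tau x (put_at n b y j)) (fun j => hfun tau x (b j))).
  2:{ intros j Hj. rewrite put_lt; auto. }
  toC. ring.
Qed.

Lemma H_den_split tau n a x :
  H_den tau (S n) (put_at n a x) = (H_den tau n a * theta_pair_prod tau n a x)%C.
Proof.
  unfold H_den, theta_pair_prod. rewrite Cprod_S. f_equal.
  - apply Cprod_ext. intros j Hj. apply Cprod_ext. intros i Hi. rewrite !put_lt by lia. auto.
  - apply Cprod_ext. intros i Hi. rewrite put_lt, put_n by lia. auto.
Qed.

Definition H_matrix tau n a b x y : nat -> nat -> C :=
  fun i j => Defs.Cinv (hfun tau (put_at n a x i) (put_at n b y j)).

Lemma H_det_split tau n a b x y :
  H_det tau (S n) (put_at n a x) (put_at n b y) =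
  (Cdet (S n) (zero_corner n (H_matrix tau n a b x y)) + / hfun tau x y * H_det tau n a b)%C.
Proof.
  unfold H_det. fold (H_matrix tau n a b x y). rewrite Cdet_corner. f_equal. f_equal.
  unfold H_matrix. rewrite !put_n. auto.
  apply Cdet_ext. intros i j Hi Hj. unfold H_matrix. rewrite !put_lt; auto.
Qed.

(* All factors of H_{2n+2}(a, x; b, y) except h(x,y) and the determinant. *)
Definition H_outer tau n a b x y : C :=
  (H_num tau n a b * Cprod n (fun i => hfun tau (a i) y) * Cprod n (fun j => hfun tau x (b j))
   * / (H_den tau n a * theta_pair_prod tau n a x * (H_den tau n b * theta_pair_prod tau n b y)))%C.

(* The corner expansion: the factor h(x,y) of the numerator cancels the
   singular entry 1/h(x,y) of the determinant. *)
Lemma H_corner_decomposition tau n a b x y : hfun tau x y <> RtoC 0 ->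
  Hfun tau (S n) (put_at n a x) (put_at n b y) =
  (H_outer tau n a b x y * H_det tau n a b
   + hfun tau x y * (H_outer tau n a b x y * Cdet (S n) (zero_corner n (H_matrix tau n a b x y))))%C.
Proof.
  intro Hh.
  rewrite Hfun_factors, H_num_split, !H_den_split, H_det_split. unfold H_outer.
  generalize (/ (H_den tau n a * theta_pair_prod tau n a x * (H_den tau n b * theta_pair_prod tau n b y)))%C.
  intro D. toC. field. auto.
Qed.

Definition punctured (y0 : C) : R -> C -> Prop := fun d y => 0 < Cmod (y - y0)%C < d.
Lemma punctured_shrinking y0 : shrinking (punctured y0).
Proof. intros d1 d2 t H [H1 H2]. split; lra. Qed.
Lemma tends_id y0 : tends (punctured y0) (fun y => y) y0.
Proof. intros e He. exists e. split; auto. intros t [_ Ht]. auto. Qed.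

Lemma tends_hfun_r tau y0 c : 0 < snd tau -> tends (punctured y0) (fun y => hfun tau c y) (hfun tau c y0).
Proof.
  intro Ht. pose proof (punctured_shrinking y0) as HN. unfold hfun. cnorm.
  tends_rules HN Ht; apply tends_id.
Qed.

Lemma tends_H_outer tau n a b x : 0 < snd tau ->
  (H_den tau n a * theta_pair_prod tau n a x * (H_den tau n b * theta_pair_prod tau n b (x + eta)))%C <> RtoC 0 ->
  tends (punctured (x + eta)%C) (H_outer tau n a b x) (H_outer tau n a b x (x + eta)%C).
Proof.
  intros Ht HD. pose proof (punctured_shrinking (x + eta)%C) as HN. unfold H_outer.
  apply (tends_mul _ HN); [apply (tends_mul _ HN); [apply (tends_mul _ HN)|] |].
  - apply tends_const.
  - apply (tends_Cprod _ HN). intros i _. apply tends_hfun_r; auto.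
  - apply tends_const.
  - apply tends_inv; auto. unfold theta_pair_prod.
    tends_rules HN Ht; try apply tends_id.
    apply (tends_Cprod _ HN). intros i _. tends_rules HN Ht; apply tends_id.
Qed.

Lemma tends_zero_corner_det tau n a b x : 0 < snd tau ->
  (forall i, (i < n)%nat -> hfun tau (a i) (x + eta)%C <> RtoC 0) ->
  tends (punctured (x + eta)%C) (fun y => Cdet (S n) (zero_corner n (H_matrix tau n a b x y)))
        (Cdet (S n) (zero_corner n (H_matrix tau n a b x (x + eta)%C))).
Proof.
  intros Ht Hh. set (y0 := (x + eta)%C). pose proof (punctured_shrinking y0) as HN.
  apply (tends_Cdet _ HN (S n) (fun y => zero_corner n (H_matrix tau n a b x y))). intros i j Hi Hj.
  unfold zero_corner, H_matrix. destruct (Nat.eq_dec j n) as [Ej|Ej].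
  - subst j. rewrite Nat.eqb_refl, Bool.andb_true_r. destruct (Nat.eqb i n) eqn:Ei. apply tends_const.
    apply Nat.eqb_neq in Ei. rewrite put_lt by lia.
    eapply (tends_ext _ HN); [exists 1; split; [lra|]; intros t _; rewrite put_n; reflexivity|].
    rewrite put_n. cnorm. apply tends_inv. apply Hh. lia. apply tends_hfun_r; auto.
  - replace (Nat.eqb j n) with false by (symmetry; apply Nat.eqb_neq; auto). rewrite Bool.andb_false_r.
    eapply (tends_ext _ HN); [exists 1; split; [lra|]; intros t _; rewrite (put_lt n b t j) by lia; reflexivity|].
    rewrite (put_lt n b y0 j) by lia. apply tends_const.
Qed.

(* At y0 = x + eta the new numerator factors h(a_i, y0) h(x, b_j) cancel the
   new denominator factors up to the product stated in the theorem. *)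
Lemma H_outer_at_shift tau n a b x : 0 < snd tau ->
  theta_pair_prod tau n a x <> RtoC 0 -> theta_pair_prod tau n b (x + eta)%C <> RtoC 0 ->
  (H_outer tau n a b x (x + eta)%C * H_det tau n a b)%C =
  Cmul (Cprod n (fun i =>
          Cmul (Cmul (theta tau (Csub (Csub x eta) (a i))) (theta tau (Cadd (Csub x eta) (a i))))
               (Cmul (theta tau (Csub (Csub x eta) (b i))) (theta tau (Cadd (Csub x eta) (b i))))))
       (Hfun tau n a b).
Proof.
  intros Ht HQa HQb.
  set (X := fun i => ((theta tau (x - eta - a i) * theta tau (x - eta + a i)) *
                       (theta tau (x - eta - b i) * theta tau (x - eta + b i)))%C).
  assert (EP : (Cprod n (fun i => hfun tau (a i) (x + eta)%C) * Cprod n (fun j => hfun tau x (b j)))%C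
               = (theta_pair_prod tau n a x * theta_pair_prod tau n b (x + eta)%C * Cprod n X)%C).
  { unfold theta_pair_prod. rewrite <- !Cprod_mul. apply Cprod_ext. intros i _.
    rewrite hfun_at_shift, hfun_factor by auto. unfold X. toC. ring. }
  unfold H_outer. rewrite Hfun_factors. cnorm.
  replace (H_num tau n a b * Cprod n (fun i => hfun tau (a i) (x + eta)) * Cprod n (fun j => hfun tau x (b j)))%C
    with (H_num tau n a b * (Cprod n (fun i => hfun tau (a i) (x + eta)) * Cprod n (fun j => hfun tau x (b j))))%C
    by (toC; ring).
  rewrite EP, !Cinv_mul. fold (X : nat -> C).
  generalize (/ H_den tau n a)%C (/ H_den tau n b)%C. intros iA iB. toC. field. auto.
Qed.

Lemma H_limit tau n a b x : 0 < snd tau ->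
  H_den tau n a <> RtoC 0 -> H_den tau n b <> RtoC 0 ->
  theta_pair_prod tau n a x <> RtoC 0 -> theta_pair_prod tau n b (x + eta)%C <> RtoC 0 ->
  (forall i, (i < n)%nat -> hfun tau (a i) (x + eta)%C <> RtoC 0) ->
  tends (punctured (x + eta)%C) (fun y => Hfun tau (S n) (put_at n a x) (put_at n b y))
    (Cmul (Cprod n (fun i =>
             Cmul (Cmul (theta tau (Csub (Csub x eta) (a i))) (theta tau (Cadd (Csub x eta) (a i))))
                  (Cmul (theta tau (Csub (Csub x eta) (b i))) (theta tau (Cadd (Csub x eta) (b i))))))
          (Hfun tau n a b)).
Proof.
  intros Ht HDa HDb HQa HQb Hh.
  set (y0 := (x + eta)%C). pose proof (punctured_shrinking y0) as HN.
  set (R := fun y => Cdet (S n) (zero_corner n (H_matrix tau n a b x y))).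
  destruct (hfun_nonzero_near_pole tau x Ht) as [d0 [Hd0 Hnz]].
  apply (tends_ext _ HN _ (fun y => H_outer tau n a b x y * H_det tau n a b
                                   + hfun tau x y * (H_outer tau n a b x y * R y))%C).
  { exists d0. split; auto. intros y Hy. apply H_corner_decomposition. apply Hnz. exact Hy. }
  assert (HO : tends (punctured y0) (H_outer tau n a b x) (H_outer tau n a b x y0)).
  { apply tends_H_outer; auto. repeat apply Cmul_nz; auto. }
  assert (HL : tends (punctured y0)
     (fun y => H_outer tau n a b x y * H_det tau n a b + hfun tau x y * (H_outer tau n a b x y * R y))%C
     (H_outer tau n a b x y0 * H_det tau n a b + hfun tau x y0 * (H_outer tau n a b x y0 * R y0))%C).
  { apply (tends_add _ HN); [apply (tends_mul _ HN); auto; apply tends_const |].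
    apply (tends_mul _ HN); [apply tends_hfun_r; auto | apply (tends_mul _ HN); auto].
    apply tends_zero_corner_det; auto. }
  assert (Hpole : hfun tau x y0 = RtoC 0) by apply hfun_pole.
  rewrite Hpole in HL.
  replace (H_outer tau n a b x y0 * H_det tau n a b + RtoC 0 * (H_outer tau n a b x y0 * R y0))%C
    with (H_outer tau n a b x y0 * H_det tau n a b)%C in HL by (toC; ring).
  rewrite <- H_outer_at_shift by auto. exact HL.
Qed.

(** * The generic set *)

(* The product of all quantities that must not vanish for [H_limit]. *)
Definition hfun_prod tau n (a : nat -> C) (x : C) : C := Cprod n (fun i => hfun tau (a i) (x + eta)%C).
Definition generic_factor tau n (a b : nat -> C) (x : C) : C :=
  (H_den tau n a * H_den tau n b * theta_pair_prod tau n a x * theta_pair_prod tau n b (x + eta)%C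
   * hfun_prod tau n a x)%C.

Definition coord_ball n (a b : nat -> C) (x : C) : R -> ((nat -> C) * (nat -> C) * C) -> Prop :=
  fun d p => near n d a b x (fst (fst p)) (snd (fst p)) (snd p).
Lemma coord_ball_shrinking n a b x : shrinking (coord_ball n a b x).
Proof. intros d1 d2 p H [H1 H2]. split. lra. intros i Hi. destruct (H2 i Hi). split; lra. Qed.

Lemma generic_factor_continuous tau n a b x : 0 < snd tau ->
  tends (coord_ball n a b x) (fun p => generic_factor tau n (fst (fst p)) (snd (fst p)) (snd p))
        (generic_factor tau n a b x).
Proof.
  intro Ht. pose proof (coord_ball_shrinking n a b x) as HN.
  assert (CA : forall i, (i < n)%nat -> tends (coord_ball n a b x) (fun p => fst (fst p) i) (a i)).
  { intros i Hi e He. exists e. split; auto. intros p [_ H]. apply H; auto. }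
  assert (CB : forall i, (i < n)%nat -> tends (coord_ball n a b x) (fun p => snd (fst p) i) (b i)).
  { intros i Hi e He. exists e. split; auto. intros p [_ H]. apply H; auto. }
  assert (CX : tends (coord_ball n a b x) (fun p => snd p) x).
  { intros e He. exists e. split; auto. intros p [H _]. apply H. }
  unfold generic_factor, H_den, theta_pair_prod, hfun_prod, hfun. cnorm.
  repeat (tends_rules HN Ht; try (apply (tends_Cprod _ HN); intros)).
  all: first [ apply CX | apply CA; lia | apply CB; lia ].
Qed.

Lemma generic_factor_open tau n a b x : 0 < snd tau -> generic_factor tau n a b x <> RtoC 0 ->
  exists r, 0 < r /\ forall a' b' x', near n r a b x a' b' x' -> generic_factor tau n a' b' x' <> RtoC 0.
Proof.
  intros Ht HE. assert (He : 0 < Cmod (generic_factor tau n a b x)) by (apply Cmod_gt_0; auto).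
  destruct (generic_factor_continuous tau n a b x Ht _ He) as [d [Hd H]]. exists d. split; auto.
  intros a' b' x' Hn E. specialize (H ((a', b'), x') Hn). simpl in H. rewrite E in H.
  replace (RtoC 0 - generic_factor tau n a b x)%C with (- generic_factor tau n a b x)%C in H by (toC; ring). rewrite Cmod_opp in H. lra.
Qed.

(* Perturbation along a line t |-> (a + t s, b + t s, x + t) with the real
   slopes s_i = i + 2: every argument of theta in the generic factor becomes
   a non-constant affine function of t. *)
Definition slope (i : nat) : C := RtoC (INR i + 2).

Lemma slope_sub_nz i j : i <> j -> (slope i - slope j)%C <> RtoC 0.
Proof. intro H. unfold slope. rewrite RtoC_sub. apply RtoC_nz. intro E. apply H. apply INR_eq. lra. Qed.
Lemma slope_add_nz i j : (slope i + slope j)%C <> RtoC 0.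
Proof. unfold slope. rewrite RtoC_add. apply RtoC_nz. pose proof (pos_INR i). pose proof (pos_INR j). lra. Qed.
Lemma slope_sub1_nz i : (slope i - RtoC 1)%C <> RtoC 0.
Proof. unfold slope. rewrite RtoC_sub. apply RtoC_nz. pose proof (pos_INR i). lra. Qed.
Lemma slope_add1_nz i : (slope i + RtoC 1)%C <> RtoC 0.
Proof. unfold slope. rewrite RtoC_add. apply RtoC_nz. pose proof (pos_INR i). lra. Qed.
Lemma slope_opp_add1_nz i : (- (slope i + RtoC 1))%C <> RtoC 0.
Proof. unfold slope. rewrite RtoC_add, RtoC_opp. apply RtoC_nz. pose proof (pos_INR i). lra. Qed.
Lemma slope_1sub_nz i : (RtoC 1 - slope i)%C <> RtoC 0.
Proof. unfold slope. rewrite RtoC_sub. apply RtoC_nz. pose proof (pos_INR i). lra. Qed.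

Lemma nonzero_near0_H_den tau n (c : nat -> C) : 0 < snd tau -> nonzero_near0 (fun s => H_den tau n (fun i => c i + s * slope i)%C).
Proof.
  intro Ht. unfold H_den. apply nonzero_near0_Cprod. intros j Hj. apply nonzero_near0_Cprod. intros i Hi. apply nonzero_near0_mul.
  - apply (nonzero_near0_theta tau _ (c i - c j)%C (slope i - slope j)%C Ht). apply slope_sub_nz. lia. intro s. toC. ring.
  - apply (nonzero_near0_theta tau _ (c i + c j)%C (slope i + slope j)%C Ht). apply slope_add_nz. intro s. toC. ring.
Qed.

Lemma nonzero_near0_theta_pair_prod tau n (c : nat -> C) (z : C) (zf : C -> C) : 0 < snd tau -> (forall s, zf s = z + s)%C ->
  nonzero_near0 (fun s => theta_pair_prod tau n (fun i => c i + s * slope i)%C (zf s)).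
Proof.
  intros Ht Hz. unfold theta_pair_prod. apply nonzero_near0_Cprod. intros i Hi. apply nonzero_near0_mul.
  - apply (nonzero_near0_theta tau _ (c i - z)%C (slope i - RtoC 1)%C Ht). apply slope_sub1_nz. intro s. rewrite Hz. toC. ring.
  - apply (nonzero_near0_theta tau _ (c i + z)%C (slope i + RtoC 1)%C Ht). apply slope_add1_nz. intro s. rewrite Hz. toC. ring.
Qed.

Lemma nonzero_near0_hfun_prod tau n (c : nat -> C) (x : C) : 0 < snd tau ->
  nonzero_near0 (fun s => hfun_prod tau n (fun i => c i + s * slope i)%C (x + s)%C).
Proof.
  intros Ht. unfold hfun_prod. apply nonzero_near0_Cprod. intros i Hi.
  eapply nonzero_near0_ext. intro s. apply hfunE.
  apply nonzero_near0_mul; apply nonzero_near0_mul.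
  - apply (nonzero_near0_theta tau _ (eta + (c i - (x + eta)))%C (slope i - RtoC 1)%C Ht). apply slope_sub1_nz. intro s. toC. ring.
  - apply (nonzero_near0_theta tau _ (eta + (c i + (x + eta)))%C (slope i + RtoC 1)%C Ht). apply slope_add1_nz. intro s. toC. ring.
  - apply (nonzero_near0_theta tau _ (eta - (c i + (x + eta)))%C (- (slope i + RtoC 1))%C Ht). apply slope_opp_add1_nz. intro s. toC. ring.
  - apply (nonzero_near0_theta tau _ (eta - c i + (x + eta))%C (RtoC 1 - slope i)%C Ht). apply slope_1sub_nz. intro s. toC. ring.
Qed.

Lemma generic_factor_nonzero_near0 tau n a b x : 0 < snd tau ->
  nonzero_near0 (fun s => generic_factor tau n (fun i => a i + s * slope i)%C
                                               (fun i => b i + s * slope i)%C (x + s)%C).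
Proof.
  intro Ht. unfold generic_factor. repeat apply nonzero_near0_mul.
  - apply nonzero_near0_H_den; auto.
  - apply nonzero_near0_H_den; auto.
  - apply (nonzero_near0_theta_pair_prod tau n a x); auto.
  - apply (nonzero_near0_theta_pair_prod tau n b (x + eta)%C); auto. intro s. toC. ring.
  - apply nonzero_near0_hfun_prod; auto.
Qed.

Lemma line_point_near n r a b x t : 0 < t -> t * (INR n + 3) <= r ->
  near n r a b x (fun i => a i + RtoC t * slope i)%C (fun i => b i + RtoC t * slope i)%C (x + RtoC t)%C.
Proof.
  intros Ht0 Htr.
  assert (HCt : Cmod (RtoC t) = t) by (rewrite Cmod_R, Rabs_right; lra).
  split.
  - change (Cmod (x + RtoC t - x)%C < r). replace (x + RtoC t - x)%C with (RtoC t) by (toC; ring).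
    rewrite HCt. pose proof (pos_INR n). nra.
  - intros i Hi.
    assert (E : Cmod (RtoC t * slope i)%C = t * (INR i + 2)).
    { unfold slope. rewrite Cmod_mult, HCt, Cmod_R, Rabs_right; auto. pose proof (pos_INR i); lra. }
    assert (Hi' : INR i + 2 < INR n + 3) by (apply lt_INR in Hi; lra).
    assert (Hsmall : t * (INR i + 2) < r) by nra.
    split.
    + change (Cmod (a i + RtoC t * slope i - a i)%C < r).
      replace (a i + RtoC t * slope i - a i)%C with (RtoC t * slope i)%C by (toC; ring). lra.
    + change (Cmod (b i + RtoC t * slope i - b i)%C < r).
      replace (b i + RtoC t * slope i - b i)%C with (RtoC t * slope i)%C by (toC; ring). lra.
Qed.

Lemma generic_factor_dense tau n a b x r : 0 < snd tau -> 0 < r ->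
  exists a' b' x', near n r a b x a' b' x' /\ generic_factor tau n a' b' x' <> RtoC 0.
Proof.
  intros Ht Hr.
  destruct (generic_factor_nonzero_near0 tau n a b x Ht) as [d [Hd H]].
  assert (Hn3 : 0 < INR n + 3) by (pose proof (pos_INR n); lra).
  set (t := Rmin (d / 2) (r / (INR n + 3))).
  assert (Ht0 : 0 < t) by (apply Rmin_pos; apply Rdiv_lt_0_compat; lra).
  assert (Htd : t < d) by (pose proof (Rmin_l (d/2) (r / (INR n + 3))); unfold t; lra).
  assert (Htr : t * (INR n + 3) <= r).
  { pose proof (Rmin_r (d/2) (r / (INR n + 3))) as Hmin. fold t in Hmin. apply Rle_div_r in Hmin; auto. }
  exists (fun i => a i + RtoC t * slope i)%C, (fun i => b i + RtoC t * slope i)%C, (x + RtoC t)%C.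
  split; [apply line_point_near; auto|].
  apply H. rewrite Cmod_R, Rabs_right; lra.
Qed.

Lemma H_limit_generic tau n a b x : 0 < snd tau -> generic_factor tau n a b x <> RtoC 0 ->
  tends (punctured (x + eta)%C) (fun y => Hfun tau (S n) (put_at n a x) (put_at n b y))
    (Cmul (Cprod n (fun i =>
             Cmul (Cmul (theta tau (Csub (Csub x eta) (a i))) (theta tau (Cadd (Csub x eta) (a i))))
                  (Cmul (theta tau (Csub (Csub x eta) (b i))) (theta tau (Cadd (Csub x eta) (b i))))))
          (Hfun tau n a b)).
Proof.
  intros Ht HG. unfold generic_factor in HG.
  pose proof (Cmul_nz_l _ _ HG) as H1. pose proof (Cmul_nz_r _ _ HG) as Hh.
  pose proof (Cmul_nz_l _ _ H1) as H2. pose proof (Cmul_nz_r _ _ H1) as HQb.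
  pose proof (Cmul_nz_l _ _ H2) as H3. pose proof (Cmul_nz_r _ _ H2) as HQa.
  pose proof (Cmul_nz_l _ _ H3) as HDa. pose proof (Cmul_nz_r _ _ H3) as HDb.
  apply H_limit; auto.
  intros i Hi. apply (Cprod_nz_inv n (fun i => hfun tau (a i) (x + eta)%C) i Hh Hi).
Qed.

Lemma Clim_at_punctured f z0 L : tends (punctured z0) f L -> Clim_at f z0 L.
Proof. intros H eps He. exact (H eps He). Qed.

(* x_1..x_{m-1} = a 0..a (m-2), x_{m+1}..x_{2m-1} = b 0..b (m-2). *)
Theorem mainTheorem3 (tau : Cx) (Htau : 0 < Cim tau) (m : nat) (Hm : (2 <= m)%nat) :
  exists G : (nat -> Cx) -> (nat -> Cx) -> Cx -> Prop,
    open_dense (m - 1) G /\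
    forall (a b : nat -> Cx) (x : Cx), G a b x ->
      Clim_at
        (fun y => Hfun tau m (put_at (m - 1) a x) (put_at (m - 1) b y))
        (Cadd x eta)
        (Cmul
          (Cprod (m - 1) (fun i =>
             Cmul (Cmul (theta tau (Csub (Csub x eta) (a i)))
                        (theta tau (Cadd (Csub x eta) (a i))))
                  (Cmul (theta tau (Csub (Csub x eta) (b i)))
                        (theta tau (Cadd (Csub x eta) (b i))))))
          (Hfun tau (m - 1) a b)).
Proof.
  unfold Cim in Htau.
  exists (fun a b x => generic_factor tau (m - 1) a b x <> RtoC 0). split.
  - split.
    + intros a b x HG. apply generic_factor_open; auto.
    + intros a b x r Hr. apply generic_factor_dense; auto.
  - intros a b x HG. destruct m as [|n]; [lia|].
    replace (S n - 1)%nat with n in * by lia.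
    apply Clim_at_punctured, H_limit_generic; auto.
Qed.
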